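(* Consider a switched network with data $(N,\mathcal S,R,f)$ satisfying the standing assumptions, running MW-$f$, with random finite initial queue size $Q(0)$ and an arrival process $A$ with stationary increments, well-defined mean arrival rate $\lambda$ ($\lambda_n=\lim_{\tau\to\infty}A_n(\tau)/\tau$ a.s., deterministic), and deviation terms $\delta_r\to0$ with $\mathbb P(\sup_{\tau\le r}\frac1r|A(\tau)-\lambda\tau|\ge\delta_r)\to0$ as $r\to\infty$. For $r\in\mathbb N$ and fixed $T>0$ let $\bar x^r(t)=(Q(rt),A(rt),Y(rt),S(rt))/r$, $t\in[0,T]$. Then for every $\delta>0$, $\mathbb P\big(d(\bar x^r(\cdot),\mathrm{FMS}(0))<\delta\big)\to1$ as $r\to\infty$.
   Context: Norms: $|x|=\max_i|x_i|$; for $g,h$ continuous on $[0,T]$, $d(g,h)=\sup_{t\in[0,T]}|g(t)-h(t)|$, and $d(g,\mathcal E)=\inf_{h\in\mathcal E}d(g,h)$. Switched network: $N$ queues; finite $\mathcal S\subset\mathbb R_+^N$; routing matrix $R\in\{0,1\}^{N\times N}$, at most one 1 per row, acyclic; $R=0$ single-hop. Discrete-time dynamics $\tau\in\{0,1,\dots\}$: $A(0)=B(0)=Y(0)=0$; $dB(\tau)=B(\tau+1)-B(\tau)\in\mathcal S$; $Y(\tau+1)-Y(\tau)=[dB(\tau)-Q(\tau)]^+$; $S_\pi(\tau)=\#\{\tau'<\tau:dB(\tau')=\pi\}$; $Q(\tau)=Q(0)+A(\tau)-(I-R^T)(B(\tau)-Y(\tau))$; processes extended to real time by linear interpolation. MW-$f$: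 $dB(\tau)\in\arg\max_{\pi\in\mathcal S}\pi\cdot(I-R)f(Q(\tau))$. Standing assumptions: $f:\mathbb R_+\to\mathbb R_+$ differentiable, strictly increasing, $f(0)=0$, and maximizers of $\rho\mapsto\rho\cdot(I-R)f(q)$ over $\mathcal S$ remain maximizers of $\rho\mapsto\rho\cdot(I-R)f(\kappa q)$ for all $\kappa\ge0$; in the multi-hop case, $\pi\in\mathcal S$ and $\rho_n\in\{0,\pi_n\}\ \forall n$ imply $\rho\in\mathcal S$. Fluid model solution with arrival rate $\lambda$ on $[0,T]$: $x=(q,a,y,s)$, $q,a,y:[0,T]\to\mathbb R_+^N$, $s=(s_\pi)_{\pi\in\mathcal S}$ nonnegative, all absolutely continuous, with $q(t)=q(0)+\lambda t-(I-R^T)(\sum_\pi s_\pi(t)\pi-y(t))$, $a(t)=\lambda t$, $\sum_\pi s_\pi(t)=t$, $y(t)\le\sum_\pi s_\pi(t)\pi$, $s_\pi,y_n$ nondecreasing, and at differentiability times $\dot y_n(t)=0$ when $q_n(t)>0$ and $\dot s_\pi(t)=0$ when $\pi\cdot(I-R)f(q(t))<\max_\rho\rho\cdot(I-R)f(q(t))$. $\mathrm{FMS}(0)$ is the set of such solutions with $q(0)=0$. *)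

From Stdlib Require Import Reals ZArith.
Open Scope R_scope.

(** * Finite sums, vectors indexed by nat (only coordinates < N matter) *)
Fixpoint rsum (n : nat) (g : nat -> R) : R :=
  match n with O => 0 | S m => rsum m g + g m end.

Definition dotN (N : nat) (u v : nat -> R) : R := rsum N (fun n => u n * v n).

Definition IminusR (N : nat) (Rm : nat -> nat -> R) (v : nat -> R) : nat -> R :=
  fun n => v n - rsum N (fun m => Rm n m * v m).
Definition IminusRT (N : nat) (Rm : nat -> nat -> R) (v : nat -> R) : nat -> R :=
  fun n => v n - rsum N (fun m => Rm m n * v m).

Definition weight (N : nat) (Rm : nat -> nat -> R) (f : R -> R) (q : nat -> R) : nat -> R :=
  IminusR N Rm (fun n => f (q n)).

(** Schedule set S = { sched k | k < K }, schedules given by index. *)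
Definition schedule_set (N K : nat) (sched : nat -> nat -> R) : Prop :=
  (forall k n, (k < K)%nat -> (n < N)%nat -> 0 <= sched k n) /\
  (forall k k', (k < K)%nat -> (k' < K)%nat -> k <> k' ->
     exists n, (n < N)%nat /\ sched k n <> sched k' n).

Definition in_sched (N K : nat) (sched : nat -> nat -> R) (rho : nat -> R) : Prop :=
  exists k, (k < K)%nat /\ forall n, (n < N)%nat -> sched k n = rho n.

Definition is_maximizer (N K : nat) (sched : nat -> nat -> R) (Rm : nat -> nat -> R)
  (f : R -> R) (q : nat -> R) (k : nat) : Prop :=
  (k < K)%nat /\
  forall k', (k' < K)%nat ->
    dotN N (sched k') (weight N Rm f q) <= dotN N (sched k) (weight N Rm f q).

Definition routing_acyclic (N : nat) (Rm : nat -> nat -> R) : Prop :=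
  ~ exists (len : nat) (p : nat -> nat),
      (0 < len)%nat /\
      (forall m, (m < len)%nat -> (p m < N)%nat /\ Rm (p m) (p (S m)) = 1) /\
      p len = p O.

Definition routing_matrix (N : nat) (Rm : nat -> nat -> R) : Prop :=
  (forall i j, (i < N)%nat -> (j < N)%nat -> Rm i j = 0 \/ Rm i j = 1) /\
  (forall i j j', (i < N)%nat -> (j < N)%nat -> (j' < N)%nat ->
      Rm i j = 1 -> Rm i j' = 1 -> j = j') /\
  routing_acyclic N Rm.

Definition single_hop (N : nat) (Rm : nat -> nat -> R) : Prop :=
  forall i j, (i < N)%nat -> (j < N)%nat -> Rm i j = 0.

Definition f_standing (f : R -> R) : Prop :=
  (* differentiable on R_+ (one-sided at 0) *)
  (forall x, 0 < x -> exists l, derivable_pt_lim f x l) /\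
  (exists l, limit1_in (fun h => (f h - f 0) / h) (fun h => 0 < h) l 0) /\
  (forall x y, 0 <= x -> x < y -> f x < f y) /\
  f 0 = 0.

Definition scale_invariance (N K : nat) (sched : nat -> nat -> R) (Rm : nat -> nat -> R)
  (f : R -> R) : Prop :=
  forall (q : nat -> R) k, (forall n, (n < N)%nat -> 0 <= q n) ->
    is_maximizer N K sched Rm f q k ->
    forall kappa, 0 <= kappa -> is_maximizer N K sched Rm f (fun n => kappa * q n) k.

Definition multihop_closure (N K : nat) (sched : nat -> nat -> R) (Rm : nat -> nat -> R) : Prop :=
  ~ single_hop N Rm ->
  forall k (rho : nat -> R), (k < K)%nat ->
    (forall n, (n < N)%nat -> rho n = 0 \/ rho n = sched k n) ->
    in_sched N K sched rho.

(** * Discrete-time MW-f network (one sample path).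
    sig t = index of the schedule dB(t) chosen at time t. *)
Fixpoint count_sched (sig : nat -> nat) (k : nat) (tau : nat) : nat :=
  match tau with
  | O => O
  | S t => (count_sched sig k t + (if Nat.eqb (sig t) k then 1 else 0))%nat
  end.

Definition Bproc (sched : nat -> nat -> R) (sig : nat -> nat) (tau n : nat) : R :=
  rsum tau (fun t => sched (sig t) n).

Definition MW_network (N K : nat) (sched : nat -> nat -> R) (Rm : nat -> nat -> R)
  (f : R -> R) (A Q Y : nat -> nat -> R) (sig : nat -> nat) : Prop :=
  (forall n, (n < N)%nat -> A O n = 0) /\
  (forall n, (n < N)%nat -> Y O n = 0) /\
  (forall tau, (sig tau < K)%nat) /\
  (forall tau n, (n < N)%nat ->
     Y (S tau) n - Y tau n = Rmax (sched (sig tau) n - Q tau n) 0) /\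
  (forall tau n, (n < N)%nat ->
     Q tau n = Q O n + A tau n
               - IminusRT N Rm (fun m => Bproc sched sig tau m - Y tau m) n) /\
  (forall tau, is_maximizer N K sched Rm f (Q tau) (sig tau)).

Definition interp (x : nat -> R) (t : R) : R :=
  let k := Z.to_nat (Int_part t) in x k + (t - INR k) * (x (S k) - x k).

Definition scaled (r : nat) (x : nat -> R) (t : R) : R := interp x (INR r * t) / INR r.

(** * Fluid paths x = (q, a, y, s); s indexed by schedule index k < K *)
Record fluid_path := mkFluid {
  fq : R -> nat -> R;
  fa : R -> nat -> R;
  fy : R -> nat -> R;
  fs : R -> nat -> R }.

Definition scaled_path (r : nat) (A Q Y : nat -> nat -> R) (sig : nat -> nat) : fluid_path :=
  {| fq := fun t n => scaled r (fun tau => Q tau n) t;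
     fa := fun t n => scaled r (fun tau => A tau n) t;
     fy := fun t n => scaled r (fun tau => Y tau n) t;
     fs := fun t k => scaled r (fun tau => INR (count_sched sig k tau)) t |}.

Definition abs_cont_on (T : R) (g : R -> R) : Prop :=
  forall eps, 0 < eps -> exists del, 0 < del /\
    forall (m : nat) (a b : nat -> R),
      (forall i, (i < m)%nat -> 0 <= a i /\ a i <= b i /\ b i <= T) ->
      (forall i, (S i < m)%nat -> b i <= a (S i)) ->
      rsum m (fun i => b i - a i) < del ->
      rsum m (fun i => Rabs (g (b i) - g (a i))) < eps.

Definition nondecr_on (T : R) (g : R -> R) : Prop :=
  forall s t, 0 <= s -> s <= t -> t <= T -> g s <= g t.

Definition is_FMS0 (N K : nat) (sched : nat -> nat -> R) (Rm : nat -> nat -> R)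
  (f : R -> R) (lam : nat -> R) (T : R) (x : fluid_path) : Prop :=
  (forall n, (n < N)%nat -> fq x 0 n = 0) /\
  (forall n, (n < N)%nat ->
     abs_cont_on T (fun t => fq x t n) /\ abs_cont_on T (fun t => fa x t n) /\
     abs_cont_on T (fun t => fy x t n)) /\
  (forall k, (k < K)%nat -> abs_cont_on T (fun t => fs x t k)) /\
  (forall t, 0 <= t <= T ->
     (forall n, (n < N)%nat -> 0 <= fq x t n /\ 0 <= fa x t n /\ 0 <= fy x t n) /\
     (forall k, (k < K)%nat -> 0 <= fs x t k) /\
     (forall n, (n < N)%nat ->
        fq x t n = fq x 0 n + lam n * t
          - IminusRT N Rm (fun m => rsum K (fun k => fs x t k * sched k m) - fy x t m) n) /\
     (forall n, (n < N)%nat -> fa x t n = lam n * t) /\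
     rsum K (fun k => fs x t k) = t /\
     (forall n, (n < N)%nat -> fy x t n <= rsum K (fun k => fs x t k * sched k n))) /\
  (forall k, (k < K)%nat -> nondecr_on T (fun t => fs x t k)) /\
  (forall n, (n < N)%nat -> nondecr_on T (fun t => fy x t n)) /\
  (forall t, 0 < t < T ->
     (forall n l, (n < N)%nat -> derivable_pt_lim (fun u => fy x u n) t l ->
        0 < fq x t n -> l = 0) /\
     (forall k l, (k < K)%nat -> derivable_pt_lim (fun u => fs x u k) t l ->
        ~ is_maximizer N K sched Rm f (fq x t) k -> l = 0)).

(** d(g,h) < delta, with d(g,h) = sup_{t in [0,T]} |g(t) - h(t)| (max norm):
    sup < delta iff the sup is bounded by some delta' < delta. *)
Definition sup_dist_lt (N K : nat) (T : R) (g h : fluid_path) (delta : R) : Prop :=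
  exists delta', delta' < delta /\
    forall t, 0 <= t <= T ->
      (forall n, (n < N)%nat ->
         Rabs (fq g t n - fq h t n) <= delta' /\
         Rabs (fa g t n - fa h t n) <= delta' /\
         Rabs (fy g t n - fy h t n) <= delta') /\
      (forall k, (k < K)%nat -> Rabs (fs g t k - fs h t k) <= delta').

Definition dist_FMS0_lt (N K : nat) (sched : nat -> nat -> R) (Rm : nat -> nat -> R)
  (f : R -> R) (lam : nat -> R) (T : R) (g : fluid_path) (delta : R) : Prop :=
  exists h, is_FMS0 N K sched Rm f lam T h /\ sup_dist_lt N K T g h delta.

Definition sigma_algebra {Omega : Type} (F : (Omega -> Prop) -> Prop) : Prop :=
  F (fun _ => True) /\
  (forall E, F E -> F (fun w => ~ E w)) /\
  (forall E : nat -> Omega -> Prop, (forall i, F (E i)) -> F (fun w => exists i, E i w)).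

Definition probability {Omega : Type} (F : (Omega -> Prop) -> Prop)
  (P : (Omega -> Prop) -> R) : Prop :=
  (forall E, F E -> 0 <= P E) /\
  P (fun _ => True) = 1 /\
  (forall E : nat -> Omega -> Prop, (forall i, F (E i)) ->
     (forall i j, i <> j -> forall w, E i w -> E j w -> False) ->
     infinite_sum (fun i => P (E i)) (P (fun w => exists i, E i w))).

(** stationary increments: the increment process (A(s+tau)-A(s))_tau has the
    same finite-dimensional distributions as (A(tau))_tau (A(0)=0). *)
Definition stationary_increments {Omega : Type} (N : nat) (P : (Omega -> Prop) -> R)
  (A : Omega -> nat -> nat -> R) : Prop :=
  forall (s m : nat) (taus : nat -> nat) (c : nat -> nat -> R),
    P (fun w => forall i n, (i < m)%nat -> (n < N)%nat ->
                  A w (s + taus i)%nat n - A w s n <= c i n) =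
    P (fun w => forall i n, (i < m)%nat -> (n < N)%nat -> A w (taus i) n <= c i n).

(** P(event r) -> 1 as r -> oo, via inner probability (no measurability needed) *)
Definition prob_tends_to_one {Omega : Type} (F : (Omega -> Prop) -> Prop)
  (P : (Omega -> Prop) -> R) (ev : nat -> Omega -> Prop) : Prop :=
  forall eps, 0 < eps -> exists r0 : nat, forall r : nat, (r0 <= r)%nat ->
    exists E, F E /\ 1 - eps <= P E /\ forall w, E w -> ev r w.

(* The probabilistic statement reduces to a deterministic one: if the initial queues are
   at most [eta r] and the arrivals stay within [eta r] of [lam tau] up to a time [mm r]
   beyond the horizon, then for [eta] small and [r] large the scaled path is within
   [delta] of FMS(0).  The deviation hypothesis and tightness of [Q(0)] make this event
   have probability tending to one.

   The deterministic statement is proved by compactness.  Along a sequence of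
   counterexamples with [eta -> 0] and [r -> oo], the scaled schedule counts and unused
   services have increments bounded by [1 + sum pi], so by Arzela-Ascoli a subsequence
   converges uniformly; the queue and arrival equations pass to the limit.  The limit
   satisfies the two complementarity conditions: where the fluid queue is positive, the
   sampled queues exceed every service rate, so no service is wasted; a schedule that
   is not a maximizer at the fluid queue is, by continuity of [f] and scale invariance,
   not a maximizer at any nearby rescaled queue, so MW-[f] never picks it there.  The
   limit is thus a fluid model solution, contradicting the choice of the sequence. *)

From Stdlib Require Import Reals ZArith Lra Lia Cantor Classical ClassicalEpsilon
  FunctionalExtensionality PropExtensionality.
Open Scope R_scope.

Lemma Rabs_le_inv a b : Rabs a <= b -> - b <= a <= b.
Proof.
  intros H. pose proof (Rle_abs a). pose proof (Rle_abs (- a)).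
  rewrite Rabs_Ropp in *. lra.
Qed.

Lemma Rabs_lt_inv a b : Rabs a < b -> - b < a < b.
Proof.
  intros H. pose proof (Rle_abs a). pose proof (Rle_abs (- a)).
  rewrite Rabs_Ropp in *. lra.
Qed.

Lemma Rabs_triang3 a b c : Rabs (a + b + c) <= Rabs a + Rabs b + Rabs c.
Proof.
  eapply Rle_trans; [apply Rabs_triang|].
  pose proof (Rabs_triang a b). lra.
Qed.

Lemma INR_unbounded x : exists n : nat, x < INR n.
Proof.
  destruct (archimed x) as [H1 _]. destruct (Z_le_gt_dec 0 (up x)) as [Hz|Hz].
  - exists (Z.to_nat (up x)). rewrite INR_IZR_INZ, Z2Nat.id by exact Hz. exact H1.
  - exists O. apply Z.gt_lt, IZR_lt in Hz. simpl. lra.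
Qed.

Lemma inv_INR_S_small eps : 0 < eps ->
  exists J : nat, forall j, (J <= j)%nat -> / (INR j + 1) < eps.
Proof.
  intros He. destruct (INR_unbounded (/ eps)) as [J HJ]. exists J. intros j Hj.
  apply le_INR in Hj. assert (0 < / eps) by (apply Rinv_0_lt_compat; auto).
  rewrite <- (Rinv_inv eps). apply Rinv_lt_contravar; nra.
Qed.

Lemma Un_cv_0_eventually_lt u e : Un_cv u 0 -> 0 < e -> exists M, forall n, (M <= n)%nat -> u n < e.
Proof.
  intros Hu He. destruct (Hu e He) as [M HM]. exists M. intros n Hn.
  specialize (HM n Hn). unfold Rdist in HM. rewrite Rminus_0_r in HM. apply Rabs_lt_inv in HM. lra.
Qed.

(** * Finite sums *)

Lemma rsum_ext n g h : (forall i, (i < n)%nat -> g i = h i) -> rsum n g = rsum n h.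
Proof.
  induction n as [|n IH]; intros H; simpl; auto.
  rewrite IH, H by (auto; intros; apply H; lia). reflexivity.
Qed.

Lemma rsum_plus n g h : rsum n (fun i => g i + h i) = rsum n g + rsum n h.
Proof. induction n; simpl; [lra | rewrite IHn; lra]. Qed.

Lemma rsum_minus n g h : rsum n (fun i => g i - h i) = rsum n g - rsum n h.
Proof. induction n; simpl; [lra | rewrite IHn; lra]. Qed.

Lemma rsum_scal n c g : rsum n (fun i => c * g i) = c * rsum n g.
Proof. induction n; simpl; [lra | rewrite IHn; lra]. Qed.

Lemma rsum_const n c : rsum n (fun _ => c) = INR n * c.
Proof. induction n; simpl rsum; [simpl; lra | rewrite IHn, S_INR; lra]. Qed.

Lemma rsum_le n g h : (forall i, (i < n)%nat -> g i <= h i) -> rsum n g <= rsum n h.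
Proof.
  induction n as [|n IH]; intros H; simpl; [lra|].
  pose proof (H n (Nat.lt_succ_diag_r n)).
  assert (rsum n g <= rsum n h) by (apply IH; intros; apply H; lia). lra.
Qed.

Lemma rsum_nonneg n g : (forall i, (i < n)%nat -> 0 <= g i) -> 0 <= rsum n g.
Proof.
  intros H. replace 0 with (rsum n (fun _ => 0)) by (rewrite rsum_const; ring).
  apply rsum_le; auto.
Qed.

Lemma rsum_abs n g : Rabs (rsum n g) <= rsum n (fun i => Rabs (g i)).
Proof.
  induction n; simpl; [rewrite Rabs_R0; lra|].
  eapply Rle_trans; [apply Rabs_triang | lra].
Qed.

Lemma rsum_term_le n g i :
  (forall j, (j < n)%nat -> 0 <= g j) -> (i < n)%nat -> g i <= rsum n g.
Proof.
  induction n as [|n IH]; intros H Hi; [lia|]. simpl.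
  assert (0 <= rsum n g) by (apply rsum_nonneg; intros; apply H; lia).
  destruct (Nat.eq_dec i n) as [->|Hne]; [lra|].
  assert (g i <= rsum n g) by (apply IH; [intros; apply H|]; lia).
  pose proof (H n (Nat.lt_succ_diag_r n)). lra.
Qed.

Lemma rsum_delta K k0 c : (k0 < K)%nat ->
  rsum K (fun k => if Nat.eqb k0 k then c k else 0) = c k0.
Proof.
  induction K as [|K IH]; intros H; [lia|]. simpl.
  destruct (Nat.eq_dec k0 K) as [->|Hne].
  - rewrite Nat.eqb_refl, (rsum_ext K _ (fun _ => 0)), rsum_const; [ring|].
    intros i Hi. destruct (Nat.eqb_spec K i); [lia | reflexivity].
  - rewrite IH by lia. destruct (Nat.eqb_spec k0 K); [lia | ring].
Qed.

(** * Linear interpolation *)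

Definition floor_nat (t : R) : nat := Z.to_nat (Int_part t).

Lemma floor_nat_spec t : 0 <= t -> INR (floor_nat t) <= t < INR (floor_nat t) + 1.
Proof.
  intros Ht. destruct (base_Int_part t) as [H1 H2].
  assert (Hz : (-1 < Int_part t)%Z) by (apply lt_IZR; lra).
  unfold floor_nat. rewrite INR_IZR_INZ, Z2Nat.id by lia. lra.
Qed.

Lemma floor_nat_unique t k : INR k <= t < INR k + 1 -> floor_nat t = k.
Proof.
  intros [H1 H2]. destruct (floor_nat_spec t) as [H3 H4]; [pose proof (pos_INR k); lra|].
  assert ((k < S (floor_nat t))%nat) by (apply INR_lt; rewrite S_INR; lra).
  assert ((floor_nat t < S k)%nat) by (apply INR_lt; rewrite S_INR; lra). lia.
Qed.

Lemma interp_eq x t :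
  interp x t = x (floor_nat t) + (t - INR (floor_nat t)) * (x (S (floor_nat t)) - x (floor_nat t)).
Proof. reflexivity. Qed.

Lemma interp_nat x n : interp x (INR n) = x n.
Proof. rewrite interp_eq, (floor_nat_unique (INR n) n) by lra. ring. Qed.

Lemma interp_ext x y t : (forall k, x k = y k) -> interp x t = interp y t.
Proof. intros H. rewrite !interp_eq, !H. reflexivity. Qed.

Lemma interp_plus x y t : interp (fun k => x k + y k) t = interp x t + interp y t.
Proof. rewrite !interp_eq. ring. Qed.

Lemma interp_minus x y t : interp (fun k => x k - y k) t = interp x t - interp y t.
Proof. rewrite !interp_eq. ring. Qed.

Lemma interp_scal c x t : interp (fun k => c * x k) t = c * interp x t.
Proof. rewrite !interp_eq. ring. Qed.

Lemma interp_const c t : interp (fun _ => c) t = c.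
Proof. rewrite interp_eq. ring. Qed.

Lemma interp_id t : interp INR t = t.
Proof. rewrite interp_eq, S_INR. ring. Qed.

Lemma interp_between x t lo hi : 0 <= t ->
  lo <= x (floor_nat t) <= hi -> lo <= x (S (floor_nat t)) <= hi -> lo <= interp x t <= hi.
Proof.
  intros Ht H1 H2. destruct (floor_nat_spec t Ht). rewrite interp_eq.
  set (th := t - INR (floor_nat t)). assert (0 <= th < 1) by (unfold th; lra).
  split; nra.
Qed.

Lemma interp_window x a b : (a <= b)%nat ->
  (forall tau, (a <= tau < b)%nat -> x (S tau) = x tau) ->
  forall t, INR a <= t <= INR b -> interp x t = x a.
Proof.
  intros Hab Hc.
  assert (Hk : forall k, (a <= k <= b)%nat -> x k = x a).
  { intros k [H1 H2]. induction H1; auto. rewrite Hc by lia. apply IHle. lia. }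
  intros t [H1 H2]. destruct (floor_nat_spec t) as [A1 A2]; [pose proof (pos_INR a); lra|].
  assert (Hka : (a <= floor_nat t)%nat)
    by (enough ((a < S (floor_nat t))%nat) by lia; apply INR_lt; rewrite S_INR; lra).
  destruct (lt_dec (floor_nat t) b).
  - rewrite interp_eq, Hc, Hk by lia. ring.
  - assert (INR b <= INR (floor_nat t)) by (apply le_INR; lia).
    replace t with (INR b) by lra. rewrite interp_nat. apply Hk. lia.
Qed.

Section Monotone_interp.
Variables (x : nat -> R) (c : R).
Hypothesis Hinc : forall k, 0 <= x (S k) - x k <= c.

Lemma incr_nat_bound i j : (i <= j)%nat -> 0 <= x j - x i <= c * (INR j - INR i).
Proof. induction 1; [lra|]. rewrite S_INR. specialize (Hinc m). lra. Qed.

Lemma interp_incr_from_nat t i : INR i <= t -> 0 <= interp x t - x i <= c * (t - INR i).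
Proof.
  intros Hi. destruct (floor_nat_spec t) as [H1 H2]; [pose proof (pos_INR i); lra|].
  assert (Hk : (i <= floor_nat t)%nat)
    by (enough ((i < S (floor_nat t))%nat) by lia; apply INR_lt; rewrite S_INR; lra).
  pose proof (incr_nat_bound _ _ Hk). specialize (Hinc (floor_nat t)). rewrite interp_eq.
  set (k := floor_nat t) in *. set (th := t - INR k). assert (0 <= th < 1) by (unfold th; lra).
  replace (c * (t - INR i)) with (c * (INR k - INR i) + c * th) by (unfold th; ring).
  split; nra.
Qed.

Lemma interp_incr_to_nat t j : 0 <= t -> t <= INR j -> 0 <= x j - interp x t <= c * (INR j - t).
Proof.
  intros Ht Hj. destruct (floor_nat_spec t Ht) as [H1 H2]. set (k := floor_nat t) in *.
  assert (Hk : (k <= j)%nat) by (apply INR_le; lra).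
  destruct (Nat.eq_dec k j) as [<-|Hne].
  - replace t with (INR k) by lra. rewrite interp_nat. specialize (Hinc 0%nat). lra.
  - assert (Hk1 : (S k <= j)%nat) by lia. pose proof (incr_nat_bound _ _ Hk1) as B.
    rewrite S_INR in B. specialize (Hinc k). rewrite interp_eq. fold k.
    set (th := t - INR k). assert (0 <= th < 1) by (unfold th; lra).
    replace (c * (INR j - t)) with (c * (INR j - (INR k + 1)) + c * (1 - th)) by (unfold th; ring).
    split; nra.
Qed.

(* Split [t, u] at the first integer after [t]. *)
Lemma interp_incr t u : 0 <= t -> t <= u -> 0 <= interp x u - interp x t <= c * (u - t).
Proof.
  intros Ht Htu. destruct (floor_nat_spec t Ht) as [H1 H2].
  assert (0 <= c) by (specialize (Hinc 0%nat); lra).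
  destruct (Rlt_le_dec u (INR (floor_nat t) + 1)).
  - rewrite !(interp_eq x), (floor_nat_unique u (floor_nat t)) by lra.
    specialize (Hinc (floor_nat t)). split; nra.
  - pose proof (interp_incr_from_nat u (S (floor_nat t))) as A.
    pose proof (interp_incr_to_nat t (S (floor_nat t)) Ht) as B.
    rewrite S_INR in A, B. specialize (A r). specialize (B ltac:(lra)). lra.
Qed.

End Monotone_interp.

(** * Fluid scaling *)

Lemma scaled_ext r x y t : (forall k, x k = y k) -> scaled r x t = scaled r y t.
Proof. intros H. unfold scaled. rewrite (interp_ext x y) by auto. reflexivity. Qed.

Lemma scaled_plus r x y t : scaled r (fun k => x k + y k) t = scaled r x t + scaled r y t.
Proof. unfold scaled. rewrite interp_plus. unfold Rdiv. ring. Qed.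

Lemma scaled_minus r x y t : scaled r (fun k => x k - y k) t = scaled r x t - scaled r y t.
Proof. unfold scaled. rewrite interp_minus. unfold Rdiv. ring. Qed.

Lemma scaled_scal r c x t : scaled r (fun k => c * x k) t = c * scaled r x t.
Proof. unfold scaled. rewrite interp_scal. unfold Rdiv. ring. Qed.

Lemma scaled_mulr r c x t : scaled r (fun k => x k * c) t = scaled r x t * c.
Proof.
  rewrite (scaled_ext r _ (fun k => c * x k)) by (intros; ring). rewrite scaled_scal. ring.
Qed.

Lemma scaled_const r c t : scaled r (fun _ => c) t = c / INR r.
Proof. unfold scaled. rewrite interp_const. reflexivity. Qed.

Lemma scaled_rsum r M F t :
  scaled r (fun k => rsum M (fun i => F i k)) t = rsum M (fun i => scaled r (F i) t).
Proof.
  induction M as [|M IH]; simpl.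
  - rewrite scaled_const. unfold Rdiv. ring.
  - rewrite scaled_plus, IH. reflexivity.
Qed.

Lemma scaled_grid r x tau : (0 < r)%nat -> scaled r x (INR tau / INR r) = x tau / INR r.
Proof.
  intros Hr. assert (0 < INR r) by (apply lt_0_INR; auto). unfold scaled.
  replace (INR r * (INR tau / INR r)) with (INR tau) by (field; lra).
  rewrite interp_nat. reflexivity.
Qed.

Lemma scaled_zero r x : scaled r x 0 = x O / INR r.
Proof. unfold scaled. rewrite Rmult_0_r, <- INR_0, interp_nat. reflexivity. Qed.

Lemma scaled_id r t : (0 < r)%nat -> scaled r INR t = t.
Proof.
  intros Hr. assert (0 < INR r) by (apply lt_0_INR; auto).
  unfold scaled. rewrite interp_id. field. lra.
Qed.

Lemma scaled_nonneg r x t : (0 < r)%nat -> (forall k, 0 <= x k) -> 0 <= t -> 0 <= scaled r x t.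
Proof.
  intros Hr Hx Ht. assert (0 < INR r) by (apply lt_0_INR; auto).
  set (u := INR r * t). assert (0 <= u) by (unfold u; nra).
  assert (0 <= interp x u).
  { pose proof (Hx (floor_nat u)). pose proof (Hx (S (floor_nat u))).
    apply (interp_between x u 0 (x (floor_nat u) + x (S (floor_nat u)))); auto; lra. }
  unfold scaled. fold u. apply Rmult_le_pos; [lra | left; apply Rinv_0_lt_compat; lra].
Qed.

Lemma scaled_incr r x c : (0 < r)%nat -> (forall k, 0 <= x (S k) - x k <= c) ->
  forall t u, 0 <= t -> t <= u -> 0 <= scaled r x u - scaled r x t <= c * (u - t).
Proof.
  intros Hr Hinc t u Ht Htu. assert (0 < INR r) by (apply lt_0_INR; auto).
  pose proof (interp_incr x c Hinc (INR r * t) (INR r * u) ltac:(nra) ltac:(nra)) as Hi.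
  unfold scaled.
  replace (interp x (INR r * u) / INR r - interp x (INR r * t) / INR r)
    with ((interp x (INR r * u) - interp x (INR r * t)) / INR r) by (field; lra).
  split; [apply Rmult_le_pos; [lra | left; apply Rinv_0_lt_compat; lra]|].
  apply (Rmult_le_reg_r (INR r)); auto. unfold Rdiv. rewrite Rmult_assoc, Rinv_l by lra. nra.
Qed.

Lemma scaled_lipschitz r x c : (0 < r)%nat -> (forall k, 0 <= x (S k) - x k <= c) ->
  forall t u, 0 <= t -> 0 <= u -> Rabs (scaled r x u - scaled r x t) <= c * Rabs (u - t).
Proof.
  intros Hr Hinc t u Ht Hu. destruct (Rle_dec t u).
  - pose proof (scaled_incr r x c Hr Hinc t u Ht r0). rewrite !Rabs_right by lra. lra.
  - pose proof (scaled_incr r x c Hr Hinc u t Hu ltac:(lra)).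
    rewrite Rabs_minus_sym, (Rabs_minus_sym u), !Rabs_right by lra. lra.
Qed.

(* The window [t0 - rho/2, t0 + rho/2], stretched by [r], lies between two integers
   whose ratio to [r] stays within [t0 - rho, t0 + rho] once [1/r < rho/2]. *)
Lemma scaled_window r x t0 rho : (0 < r)%nat -> 0 < rho -> rho <= t0 -> / INR r < rho / 2 ->
  (forall tau : nat, t0 - rho <= INR tau / INR r <= t0 + rho -> x (S tau) = x tau) ->
  forall u, Rabs (u - t0) <= rho / 2 -> scaled r x u = scaled r x t0.
Proof.
  intros Hr Hrho Ht0 Hinv Hc. assert (HR : 0 < INR r) by (apply lt_0_INR; auto).
  assert (Hrinv : 1 < INR r * (rho / 2)).
  { apply (Rmult_lt_compat_l (INR r)) in Hinv; auto. rewrite Rinv_r in Hinv by lra. lra. }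
  destruct (floor_nat_spec (INR r * (t0 - rho / 2))) as [A1 A2]; [nra|].
  destruct (floor_nat_spec (INR r * (t0 + rho / 2))) as [B1 B2]; [nra|].
  set (a := floor_nat (INR r * (t0 - rho / 2))) in *.
  set (b := S (floor_nat (INR r * (t0 + rho / 2)))).
  assert (Hb : INR b = INR (floor_nat (INR r * (t0 + rho / 2))) + 1) by apply S_INR.
  assert (Hw : forall t, INR a <= t <= INR b -> interp x t = x a).
  { apply interp_window; [apply INR_le; nra|]. intros tau [T1 T2]. apply Hc.
    apply le_INR in T1. apply lt_INR in T2. rewrite Hb in T2.
    assert (INR tau <= INR (floor_nat (INR r * (t0 + rho / 2)))).
    { apply le_INR. enough ((tau < S (floor_nat (INR r * (t0 + rho / 2))))%nat) by lia.
      apply INR_lt. rewrite S_INR. lra. }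
    split; unfold Rdiv; apply (Rmult_le_reg_r (INR r)); auto;
      rewrite Rmult_assoc, Rinv_l by lra; nra. }
  intros u Hu. apply Rabs_le_inv in Hu. unfold scaled. rewrite !Hw; auto; nra.
Qed.

(** * Lipschitz functions on [[0, T]] *)

Definition lipschitz_on (T : R) (g : R -> R) : Prop := exists L, 0 <= L /\
  forall s t, 0 <= s <= T -> 0 <= t <= T -> Rabs (g t - g s) <= L * Rabs (t - s).

Lemma lipschitz_plus T g h : lipschitz_on T g -> lipschitz_on T h ->
  lipschitz_on T (fun t => g t + h t).
Proof.
  intros [L1 [H1 G1]] [L2 [H2 G2]]. exists (L1 + L2). split; [lra|]. intros s t Hs Ht.
  specialize (G1 s t Hs Ht). specialize (G2 s t Hs Ht).
  replace (g t + h t - (g s + h s)) with ((g t - g s) + (h t - h s)) by ring.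
  eapply Rle_trans; [apply Rabs_triang | lra].
Qed.

Lemma lipschitz_scal T c g : lipschitz_on T g -> lipschitz_on T (fun t => c * g t).
Proof.
  intros [L [HL G]]. exists (Rabs c * L). split; [pose proof (Rabs_pos c); nra|].
  intros s t Hs Ht. replace (c * g t - c * g s) with (c * (g t - g s)) by ring.
  rewrite Rabs_mult, Rmult_assoc. apply Rmult_le_compat_l; [apply Rabs_pos | auto].
Qed.

Lemma lipschitz_minus T g h : lipschitz_on T g -> lipschitz_on T h ->
  lipschitz_on T (fun t => g t - h t).
Proof.
  intros Hg Hh. destruct (lipschitz_plus T g _ Hg (lipschitz_scal T (-1) h Hh)) as [L [HL G]].
  exists L. split; auto. intros s t Hs Ht.
  replace (g t - h t - (g s - h s)) with (g t + -1 * h t - (g s + -1 * h s)) by ring. auto.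
Qed.

Lemma lipschitz_linear T c : lipschitz_on T (fun t => c * t).
Proof.
  exists (Rabs c). split; [apply Rabs_pos|]. intros.
  replace (c * t - c * s) with (c * (t - s)) by ring. rewrite Rabs_mult. lra.
Qed.

Lemma lipschitz_rsum T M (G : nat -> R -> R) :
  (forall i, (i < M)%nat -> lipschitz_on T (G i)) -> lipschitz_on T (fun t => rsum M (fun i => G i t)).
Proof.
  induction M as [|M IH]; intros H; simpl.
  - exists 0. split; [lra|]. intros. rewrite Rminus_diag, Rabs_R0. lra.
  - apply lipschitz_plus; [apply IH; intros i Hi|]; apply H; lia.
Qed.

Lemma lipschitz_ext T g h : (forall t, 0 <= t <= T -> g t = h t) ->
  lipschitz_on T g -> lipschitz_on T h.
Proof.
  intros E [L [HL G]]. exists L. split; auto. intros s t Hs Ht. rewrite <- !E by auto. auto.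
Qed.

Lemma lipschitz_abs_cont T g : lipschitz_on T g -> abs_cont_on T g.
Proof.
  intros [L [HL G]] eps Heps. exists (eps / (L + 1)). split; [apply Rdiv_lt_0_compat; lra|].
  intros m a b Hab _ Hs.
  assert (Hle : rsum m (fun i => Rabs (g (b i) - g (a i))) <= L * rsum m (fun i => b i - a i)).
  { rewrite <- rsum_scal. apply rsum_le. intros i Hi. destruct (Hab i Hi) as [A1 [A2 A3]].
    eapply Rle_trans; [apply G; lra|]. rewrite Rabs_right by lra. lra. }
  assert (L * rsum m (fun i => b i - a i) <= L * (eps / (L + 1)))
    by (apply Rmult_le_compat_l; lra).
  assert (L * (eps / (L + 1)) < eps).
  { apply (Rmult_lt_reg_r (L + 1)); [lra|].
    replace (L * (eps / (L + 1)) * (L + 1)) with (L * eps) by (field; lra). nra. }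
  lra.
Qed.

Lemma lipschitz_near T g t0 : lipschitz_on T g -> forall e, 0 < e ->
  exists rho, 0 < rho /\ forall u, 0 <= u <= T -> 0 <= t0 <= T ->
    Rabs (u - t0) <= rho -> Rabs (g u - g t0) <= e.
Proof.
  intros [L [HL G]] e He. exists (e / (L + 1)). split; [apply Rdiv_lt_0_compat; lra|].
  intros u Hu Ht0 Hut. eapply Rle_trans; [apply G; auto|].
  apply Rle_trans with (L * (e / (L + 1))); [apply Rmult_le_compat_l; auto|].
  apply (Rmult_le_reg_r (L + 1)); [lra|].
  replace (L * (e / (L + 1)) * (L + 1)) with (L * e) by (field; lra). nra.
Qed.

(** * Real analysis *)

Lemma derivable_pt_lim_locally_const g t0 l rho : 0 < rho ->
  (forall u, Rabs (u - t0) < rho -> g u = g t0) -> derivable_pt_lim g t0 l -> l = 0.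
Proof.
  intros Hr Hc Hd. destruct (Req_dec l 0) as [|Hl]; auto. exfalso.
  assert (Hal : 0 < Rabs l) by (apply Rabs_pos_lt; auto).
  destruct (Hd (Rabs l / 2) ltac:(lra)) as [del Hdel].
  pose proof (cond_pos del). set (h := Rmin del rho / 2).
  assert (0 < Rmin del rho) by (apply Rmin_pos; lra).
  pose proof (Rmin_l del rho). pose proof (Rmin_r del rho).
  assert (Hh : Rabs h = h) by (apply Rabs_right; unfold h; lra).
  specialize (Hdel h ltac:(apply Rgt_not_eq; unfold h; lra) ltac:(rewrite Hh; unfold h; lra)).
  rewrite (Hc (t0 + h)) in Hdel by (replace (t0 + h - t0) with h by ring; rewrite Hh; unfold h; lra).
  replace ((g t0 - g t0) / h - l) with (- l) in Hdel by (field; unfold h; lra).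
  rewrite Rabs_Ropp in Hdel. lra.
Qed.

(* A difference quotient within 1 of [l] makes [f] locally [|l| + 1]-Lipschitz at [x]. *)
Lemma continuous_of_diff_quot (D : R -> Prop) f x l del : 0 < del ->
  (forall y, D y -> y <> x -> Rabs (y - x) < del -> Rabs ((f y - f x) / (y - x) - l) < 1) ->
  forall eps, 0 < eps -> exists rho, 0 < rho /\
    forall y, D y -> Rabs (y - x) < rho -> Rabs (f y - f x) < eps.
Proof.
  intros Hdel Hq eps Heps. pose proof (Rabs_pos l).
  exists (Rmin del (eps / (Rabs l + 1))). split; [apply Rmin_pos; [lra | apply Rdiv_lt_0_compat; lra]|].
  intros y Hy Hyx.
  pose proof (Rmin_l del (eps / (Rabs l + 1))). pose proof (Rmin_r del (eps / (Rabs l + 1))).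
  destruct (Req_dec y x) as [->|Hne]; [rewrite Rminus_diag, Rabs_R0; lra|].
  specialize (Hq y Hy Hne ltac:(lra)).
  assert (Hyx0 : 0 < Rabs (y - x)) by (apply Rabs_pos_lt; lra).
  assert (Q1 : Rabs ((f y - f x) / (y - x)) < Rabs l + 1)
    by (pose proof (Rabs_triang_inv ((f y - f x) / (y - x)) l); lra).
  unfold Rdiv in Q1. rewrite Rabs_mult, Rabs_inv in Q1.
  apply (Rmult_lt_compat_r (Rabs (y - x))) in Q1; auto.
  rewrite Rmult_assoc, Rinv_l in Q1 by lra.
  assert ((Rabs l + 1) * Rabs (y - x) <= (Rabs l + 1) * (eps / (Rabs l + 1)))
    by (apply Rmult_le_compat_l; lra).
  replace ((Rabs l + 1) * (eps / (Rabs l + 1))) with eps in * by (field; lra). lra.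
Qed.

Lemma f_standing_continuous f : f_standing f -> forall x, 0 <= x -> forall eps, 0 < eps ->
  exists rho, 0 < rho /\ forall y, 0 <= y -> Rabs (y - x) < rho -> Rabs (f y - f x) < eps.
Proof.
  intros [Hd [H0 _]] x [Hx|<-].
  - destruct (Hd x Hx) as [l Hl]. destruct (Hl 1 ltac:(lra)) as [del Hdel].
    apply (continuous_of_diff_quot (fun y => 0 <= y) f x l del (cond_pos del)).
    intros y _ Hne Hyx. specialize (Hdel (y - x) ltac:(lra) Hyx).
    replace (x + (y - x)) with y in Hdel by ring. exact Hdel.
  - destruct H0 as [l Hl]. destruct (Hl 1 ltac:(lra)) as [del [Hdp Hdel]].
    apply (continuous_of_diff_quot (fun y => 0 <= y) f 0 l del Hdp).
    intros y Hy Hne Hyx. rewrite Rminus_0_r. apply (Hdel y). split; [lra | exact Hyx].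
Qed.

(** * Extraction of convergent subsequences *)

Lemma eventually_fin (D : nat) (P : nat -> nat -> Prop) :
  (forall c J J', (J <= J')%nat -> P c J -> P c J') ->
  (forall c, (c < D)%nat -> exists J, P c J) -> exists J, forall c, (c < D)%nat -> P c J.
Proof.
  intros Hm. induction D as [|D IH]; intros H; [exists O; intros; lia|].
  destruct IH as [J1 HJ1]; [intros; apply H; lia|].
  destruct (H D ltac:(lia)) as [J0 HJ0]. exists (max J0 J1). intros c Hc.
  destruct (Nat.eq_dec c D) as [->|Hne].
  - apply (Hm _ J0); auto; lia.
  - apply (Hm _ J1); [lia | apply HJ1; lia].
Qed.

Lemma fin_min_pos (D : nat) (P : nat -> R -> Prop) :
  (forall c x y, 0 < x -> x <= y -> P c y -> P c x) ->
  (forall c, (c < D)%nat -> exists x, 0 < x /\ P c x) ->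
  exists x, 0 < x /\ forall c, (c < D)%nat -> P c x.
Proof.
  intros Hm. induction D as [|D IH]; intros H; [exists 1; split; [lra | intros; lia]|].
  destruct IH as [x1 [Hx1 H1]]; [intros; apply H; lia|].
  destruct (H D ltac:(lia)) as [x0 [Hx0 H0]].
  assert (Hpos : 0 < Rmin x0 x1) by (apply Rmin_pos; auto).
  exists (Rmin x0 x1). split; auto. intros c Hc. destruct (Nat.eq_dec c D) as [->|Hne].
  - apply (Hm _ _ x0); auto. apply Rmin_l.
  - apply (Hm _ _ x1); [auto | apply Rmin_r | apply H1; lia].
Qed.

(* Subsequences are encoded by reindexings [psi] with [n <= psi n]; these need not be
   increasing, but they preserve limits and are closed under composition. *)
Lemma bounded_subseq_cv (u : nat -> R) B : (forall n, Rabs (u n) <= B) ->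
  exists psi : nat -> nat, (forall n, (n <= psi n)%nat) /\ exists l, Un_cv (fun n => u (psi n)) l.
Proof.
  intros HB.
  destruct (Bolzano_Weierstrass u (fun c => - B <= c <= B) (compact_P3 _ _)) as [l Hl].
  { intros n. apply Rabs_le_inv, HB. }
  assert (Hc : forall j, exists m, (j <= m)%nat /\ Rabs (u m - l) < / (INR j + 1)).
  { intros j. assert (Hpos : 0 < / (INR j + 1)) by (apply Rinv_0_lt_compat; pose proof (pos_INR j); lra).
    apply (Hl (disc l (mkposreal _ Hpos)) j). exists (mkposreal _ Hpos). intros y Hy. exact Hy. }
  destruct (choice _ Hc) as [psi Hpsi]. exists psi. split; [intros n; apply Hpsi|].
  exists l. intros eps He. destruct (inv_INR_S_small eps He) as [J HJ]. exists J.
  intros n Hn. destruct (Hpsi n) as [_ Hn']. specialize (HJ n Hn). unfold Rdist. lra.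
Qed.

(* Cantor's diagonal argument: coordinate [i] is made convergent at stage [i], and the
   diagonal [n |-> Phi n n] is a tail-reindexing of every stage. *)
Lemma diagonal_subseq_cv (v : nat -> nat -> R) :
  (forall i, exists B, forall n, Rabs (v i n) <= B) ->
  exists d : nat -> nat, (forall n, (n <= d n)%nat) /\
    forall i, exists l, Un_cv (fun n => v i (d n)) l.
Proof.
  intros HB.
  assert (Hex : forall p : (nat -> nat) * nat, exists psi : nat -> nat, (forall n, (n <= psi n)%nat) /\
    exists l, Un_cv (fun n => v (snd p) (fst p (psi n))) l).
  { intros [phi i]. destruct (HB i) as [B HBi].
    apply (bounded_subseq_cv (fun n => v i (phi n)) B). intros; apply HBi. }
  destruct (choice _ Hex) as [ext Hext].
  set (Phi := fix Phi (i : nat) : nat -> nat := match i with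
      | O => ext ((fun n => n), O)
      | S i' => fun n => Phi i' (ext (Phi i', S i') n) end).
  assert (Hstage : forall i, exists l, Un_cv (fun n => v i (Phi i n)) l).
  { intros [|i]; [apply (Hext (fun n => n, O)) | apply (Hext (Phi i, S i))]. }
  assert (Hgrow : forall i n, (n <= Phi i n)%nat).
  { induction i as [|i IH]; intros n; simpl; [apply (Hext (fun n => n, O))|].
    specialize (IH (ext (Phi i, S i) n)). pose proof (proj1 (Hext (Phi i, S i)) n). lia. }
  assert (Htail : forall i j, (i <= j)%nat -> exists rho : nat -> nat,
      (forall n, (n <= rho n)%nat) /\ forall n, Phi j n = Phi i (rho n)).
  { intros i j Hj. induction Hj as [|j Hj IH].
    - exists (fun n => n). split; auto.
    - destruct IH as [rho [Hr1 Hr2]]. exists (fun n => rho (ext (Phi j, S j) n)). split.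
      + intros n. specialize (Hr1 (ext (Phi j, S j) n)).
        pose proof (proj1 (Hext (Phi j, S j)) n). lia.
      + intros n. apply Hr2. }
  exists (fun n => Phi n n). split; [intros n; apply Hgrow|].
  intros i. destruct (Hstage i) as [l Hl]. exists l. intros eps He.
  destruct (Hl eps He) as [M HM]. exists (max M i). intros n Hn.
  destruct (Htail i n ltac:(lia)) as [rho [Hr1 Hr2]]. rewrite Hr2. apply HM.
  specialize (Hr1 n). lia.
Qed.

(** * Uniform convergence on [[0, T]] *)

Definition unif_cv (T : R) (h : nat -> R -> R) (H : R -> R) : Prop :=
  forall e, 0 < e -> exists J, forall j, (J <= j)%nat ->
    forall t, 0 <= t <= T -> Rabs (h j t - H t) <= e.

Lemma unif_cv_of_unif_cauchy T (h : nat -> R -> R) :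
  (forall e, 0 < e -> exists J, forall j j', (J <= j)%nat -> (J <= j')%nat ->
     forall t, 0 <= t <= T -> Rabs (h j t - h j' t) <= e) ->
  exists H, unif_cv T h H.
Proof.
  intros HC.
  assert (Hpt : forall t, exists l, 0 <= t <= T -> Un_cv (fun j => h j t) l).
  { intros t. destruct (Rle_dec 0 t) as [H0|H0]; [destruct (Rle_dec t T) as [H1|H1]|];
      [|exists 0; intros; lra | exists 0; intros; lra].
    destruct (R_complete (fun j => h j t)) as [l Hl]; [|exists l; auto].
    intros e He. destruct (HC (e / 2) ltac:(lra)) as [J HJ]. exists J. intros n m Hn Hm.
    unfold Rdist. specialize (HJ n m Hn Hm t (conj H0 H1)). lra. }
  destruct (choice _ Hpt) as [H HH]. exists H. intros e He.
  destruct (HC e He) as [J HJ]. exists J. intros j Hj t Ht.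
  apply Rle_plus_epsilon. intros e' He'. destruct (HH t Ht e' He') as [J' HJ'].
  specialize (HJ' (max J J') ltac:(lia)). specialize (HJ j (max J J') Hj ltac:(lia) t Ht).
  unfold Rdist in HJ'. pose proof (Rabs_triang (h j t - h (max J J') t) (h (max J J') t - H t)).
  replace (h j t - h (max J J') t + (h (max J J') t - H t)) with (h j t - H t) in * by ring. lra.
Qed.

Lemma grid_point_near T M t : 0 < T -> 0 <= t <= T ->
  exists a, (a <= M)%nat /\ Rabs (t - T * INR a / INR (S M)) <= T / INR (S M).
Proof.
  intros HT Ht. assert (HM : 0 < INR (S M)) by (apply lt_0_INR; lia).
  assert (HTM : 0 < T / INR (S M)) by (apply Rdiv_lt_0_compat; lra).
  set (z := t * INR (S M) / T).
  assert (Hz : 0 <= z) by (unfold z; apply Rmult_le_pos; [nra | left; apply Rinv_0_lt_compat; lra]).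
  assert (Hz2 : z <= INR (S M)).
  { unfold z, Rdiv. apply (Rmult_le_reg_r T); auto. rewrite Rmult_assoc, Rinv_l by lra. nra. }
  destruct (floor_nat_spec z Hz) as [A1 A2].
  assert (Htz : t = T * z / INR (S M)) by (unfold z; field; lra).
  destruct (le_lt_dec (floor_nat z) M) as [Hl|Hl].
  - exists (floor_nat z). split; auto. rewrite Htz.
    replace (T * z / INR (S M) - T * INR (floor_nat z) / INR (S M))
      with ((z - INR (floor_nat z)) * (T / INR (S M))) by (field; lra).
    rewrite Rabs_mult, (Rabs_right (T / INR (S M))), Rabs_right by lra. nra.
  - exists M. split; auto. assert (INR (S M) <= INR (floor_nat z)) by (apply le_INR; lia).
    replace t with (T * INR (S M) / INR (S M)) by (rewrite Htz; f_equal; f_equal; lra).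
    rewrite S_INR at 1.
    replace (T * (INR M + 1) / INR (S M) - T * INR M / INR (S M)) with (T / INR (S M)) by (field; lra).
    rewrite Rabs_right; lra.
Qed.

(* Equi-Lipschitz functions converging on the grids [T a / (M + 1)] are uniformly Cauchy:
   every point is within [T / (M + 1)] of a grid point. *)
Lemma grid_cv_unif_cauchy T L (h : nat -> R -> R) : 0 < T -> 0 <= L ->
  (forall j s t, 0 <= s <= T -> 0 <= t <= T -> Rabs (h j t - h j s) <= L * Rabs (t - s)) ->
  (forall M a, (a <= M)%nat -> exists l, Un_cv (fun j => h j (T * INR a / INR (S M))) l) ->
  forall e, 0 < e -> exists J, forall j j', (J <= j)%nat -> (J <= j')%nat ->
    forall t, 0 <= t <= T -> Rabs (h j t - h j' t) <= e.
Proof.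
  intros HT HL HLip Hgrid e He. destruct (INR_unbounded (3 * L * T / e)) as [M HM].
  assert (HSM : 0 < INR (S M)) by (apply lt_0_INR; lia).
  assert (HLT : L * (T / INR (S M)) <= e / 3).
  { rewrite S_INR in *. apply (Rmult_le_reg_r (INR M + 1)); [lra|].
    replace (L * (T / (INR M + 1)) * (INR M + 1)) with (L * T) by (field; lra).
    apply (Rmult_lt_compat_r e) in HM; auto.
    replace (3 * L * T / e * e) with (3 * L * T) in HM by (field; lra). nra. }
  assert (Hpt : forall a, (a <= M)%nat -> 0 <= T * INR a / INR (S M) <= T).
  { intros a Ha. assert (INR a <= INR (S M)) by (apply le_INR; lia). pose proof (pos_INR a).
    split; [apply Rmult_le_pos; [nra | left; apply Rinv_0_lt_compat; lra]|].
    apply (Rmult_le_reg_r (INR (S M))); auto. unfold Rdiv. rewrite Rmult_assoc, Rinv_l by lra. nra. }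
  destruct (eventually_fin (S M) (fun a J => forall j j', (J <= j)%nat -> (J <= j')%nat ->
      Rabs (h j (T * INR a / INR (S M)) - h j' (T * INR a / INR (S M))) < e / 3)) as [J HJ].
  { intros a J J' HJJ H j j' Hj Hj'. apply H; lia. }
  { intros a Ha. destruct (Hgrid M a ltac:(lia)) as [l Hl]. destruct (Hl (e / 6) ltac:(lra)) as [J HJ].
    exists J. intros j j' Hj Hj'. pose proof (HJ j Hj) as A. pose proof (HJ j' Hj') as B.
    unfold Rdist in A, B. rewrite Rabs_minus_sym in B.
    pose proof (Rabs_triang (h j (T * INR a / INR (S M)) - l) (l - h j' (T * INR a / INR (S M)))).
    replace (h j (T * INR a / INR (S M)) - l + (l - h j' (T * INR a / INR (S M))))
      with (h j (T * INR a / INR (S M)) - h j' (T * INR a / INR (S M))) in * by ring. lra. }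
  exists J. intros j j' Hj Hj' t Ht.
  destruct (grid_point_near T M t HT Ht) as [a [Ha Hat]].
  specialize (HJ a ltac:(lia) j j' Hj Hj'). set (p := T * INR a / INR (S M)) in *.
  pose proof (HLip j p t (Hpt a Ha) Ht). pose proof (HLip j' p t (Hpt a Ha) Ht).
  assert (L * Rabs (t - p) <= e / 3)
    by (apply Rle_trans with (L * (T / INR (S M))); auto; apply Rmult_le_compat_l; auto).
  replace (h j t - h j' t) with ((h j t - h j p) + (h j p - h j' p) + - (h j' t - h j' p)) by ring.
  eapply Rle_trans; [apply Rabs_triang3|]. rewrite Rabs_Ropp. lra.
Qed.

Lemma arzela_ascoli (T L B : R) (D : nat) (g : nat -> nat -> R -> R) : 0 < T -> 0 <= L ->
  (forall j c t, (c < D)%nat -> 0 <= t <= T -> Rabs (g j c t) <= B) ->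
  (forall j c s t, (c < D)%nat -> 0 <= s <= T -> 0 <= t <= T ->
     Rabs (g j c t - g j c s) <= L * Rabs (t - s)) ->
  exists d : nat -> nat, (forall n, (n <= d n)%nat) /\
    exists G : nat -> R -> R, forall c, (c < D)%nat -> unif_cv T (fun j => g (d j) c) (G c).
Proof.
  intros HT HL HB HLip.
  set (coord := fun i => let (c, p) := Cantor.of_nat i in let (a, M) := Cantor.of_nat p in (c, a, M)).
  set (v := fun i j => let '(c, a, M) := coord i in
              if Nat.ltb c D then g j c (Rmin T (T * INR a / INR (S M))) else 0).
  assert (Hcoord : forall c a M, coord (Cantor.to_nat (c, Cantor.to_nat (a, M))) = (c, a, M)).
  { intros c a M. unfold coord. rewrite !Cantor.cancel_of_to. reflexivity. }
  assert (Hgrid : forall a M, (a <= M)%nat -> Rmin T (T * INR a / INR (S M)) = T * INR a / INR (S M)).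
  { intros a M Ha. apply Rmin_right. assert (INR a <= INR (S M)) by (apply le_INR; lia).
    assert (0 < INR (S M)) by (apply lt_0_INR; lia).
    apply (Rmult_le_reg_r (INR (S M))); auto. unfold Rdiv. rewrite Rmult_assoc, Rinv_l by lra. nra. }
  destruct (diagonal_subseq_cv v) as [d [Hd Hconv]].
  { intros i. exists (Rabs B). intros n. unfold v. destruct (coord i) as [[c a] M].
    destruct (Nat.ltb_spec c D); [|rewrite Rabs_R0; apply Rabs_pos].
    eapply Rle_trans; [apply HB; auto|apply Rle_abs].
    assert (0 <= T * INR a / INR (S M))
      by (apply Rmult_le_pos; [pose proof (pos_INR a); nra | left; apply Rinv_0_lt_compat, lt_0_INR; lia]).
    split; [apply Rmin_glb; lra | apply Rmin_l]. }
  exists d. split; auto.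
  assert (HG : forall c, exists G, (c < D)%nat -> unif_cv T (fun j => g (d j) c) G).
  { intros c. destruct (Nat.ltb_spec c D) as [Hc|Hc]; [|exists (fun _ => 0); intros; lia].
    destruct (unif_cv_of_unif_cauchy T (fun j => g (d j) c)) as [G HG]; [|exists G; auto].
    apply (grid_cv_unif_cauchy T L); auto.
    intros M a Ha. destruct (Hconv (Cantor.to_nat (c, Cantor.to_nat (a, M)))) as [l Hl].
    exists l. unfold v in Hl. rewrite Hcoord, Hgrid in Hl by auto.
    destruct (Nat.ltb_spec c D); [exact Hl | lia]. }
  destruct (choice _ HG) as [G HG']. exists G. auto.
Qed.

Lemma unif_cv_ext T h h' H H' :
  (forall j t, 0 <= t <= T -> h j t = h' j t) -> (forall t, 0 <= t <= T -> H t = H' t) ->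
  unif_cv T h H -> unif_cv T h' H'.
Proof.
  intros Eh EH Hc e He. destruct (Hc e He) as [J HJ]. exists J. intros j Hj t Ht.
  rewrite <- Eh, <- EH by auto. auto.
Qed.

Lemma unif_cv_plus T h1 h2 H1 H2 : unif_cv T h1 H1 -> unif_cv T h2 H2 ->
  unif_cv T (fun j t => h1 j t + h2 j t) (fun t => H1 t + H2 t).
Proof.
  intros C1 C2 e He. destruct (C1 (e / 2) ltac:(lra)) as [J1 HJ1].
  destruct (C2 (e / 2) ltac:(lra)) as [J2 HJ2]. exists (max J1 J2). intros j Hj t Ht.
  specialize (HJ1 j ltac:(lia) t Ht). specialize (HJ2 j ltac:(lia) t Ht).
  replace (h1 j t + h2 j t - (H1 t + H2 t)) with ((h1 j t - H1 t) + (h2 j t - H2 t)) by ring.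
  eapply Rle_trans; [apply Rabs_triang | lra].
Qed.

Lemma unif_cv_scal T c h H : unif_cv T h H -> unif_cv T (fun j t => c * h j t) (fun t => c * H t).
Proof.
  intros C e He. pose proof (Rabs_pos c).
  destruct (C (e / (Rabs c + 1)) ltac:(apply Rdiv_lt_0_compat; lra)) as [J HJ].
  exists J. intros j Hj t Ht. specialize (HJ j Hj t Ht).
  replace (c * h j t - c * H t) with (c * (h j t - H t)) by ring. rewrite Rabs_mult.
  apply Rle_trans with (Rabs c * (e / (Rabs c + 1))); [apply Rmult_le_compat_l; auto|].
  apply (Rmult_le_reg_r (Rabs c + 1)); [lra|].
  replace (Rabs c * (e / (Rabs c + 1)) * (Rabs c + 1)) with (Rabs c * e) by (field; lra). nra.
Qed.

Lemma unif_cv_minus T h1 h2 H1 H2 : unif_cv T h1 H1 -> unif_cv T h2 H2 ->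
  unif_cv T (fun j t => h1 j t - h2 j t) (fun t => H1 t - H2 t).
Proof.
  intros C1 C2. apply (unif_cv_ext T (fun j t => h1 j t + -1 * h2 j t) _ (fun t => H1 t + -1 * H2 t));
    [intros; ring | intros; ring|].
  apply unif_cv_plus, unif_cv_scal; auto.
Qed.

Lemma unif_cv_rsum T M (h : nat -> nat -> R -> R) (H : nat -> R -> R) :
  (forall i, (i < M)%nat -> unif_cv T (fun j => h j i) (H i)) ->
  unif_cv T (fun j t => rsum M (fun i => h j i t)) (fun t => rsum M (fun i => H i t)).
Proof.
  induction M as [|M IH]; intros C; simpl.
  - intros e He. exists O. intros. rewrite Rminus_diag, Rabs_R0. lra.
  - apply unif_cv_plus; [apply IH; intros|]; apply C; lia.
Qed.

Lemma unif_cv_fin T D (h : nat -> nat -> R -> R) (H : nat -> R -> R) :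
  (forall c, (c < D)%nat -> unif_cv T (fun j => h j c) (H c)) ->
  forall e, 0 < e -> exists J, forall j, (J <= j)%nat ->
    forall t, 0 <= t <= T -> forall c, (c < D)%nat -> Rabs (h j c t - H c t) <= e.
Proof.
  intros C e He.
  destruct (eventually_fin D (fun c J => forall j, (J <= j)%nat ->
      forall t, 0 <= t <= T -> Rabs (h j c t - H c t) <= e)) as [J HJ].
  - intros c J J' HJJ HP j Hj. apply HP. lia.
  - intros c Hc. apply (C c Hc e He).
  - exists J. intros j Hj t Ht c Hc. apply HJ; auto.
Qed.

Lemma unif_limit_le T h1 h2 H1 H2 s t : unif_cv T h1 H1 -> unif_cv T h2 H2 ->
  0 <= s <= T -> 0 <= t <= T -> (exists J, forall j, (J <= j)%nat -> h1 j s <= h2 j t) ->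
  H1 s <= H2 t.
Proof.
  intros C1 C2 Hs Ht [J HJ]. apply Rle_plus_epsilon. intros e He.
  destruct (C1 (e / 2) ltac:(lra)) as [J1 HJ1]. destruct (C2 (e / 2) ltac:(lra)) as [J2 HJ2].
  set (j := max J (max J1 J2)). specialize (HJ j ltac:(lia)).
  pose proof (Rabs_le_inv _ _ (HJ1 j ltac:(lia) s Hs)).
  pose proof (Rabs_le_inv _ _ (HJ2 j ltac:(lia) t Ht)). lra.
Qed.

Lemma unif_cv_const T c : unif_cv T (fun _ _ => c) (fun _ => c).
Proof. intros e He. exists O. intros. rewrite Rminus_diag, Rabs_R0. lra. Qed.

Lemma unif_limit_value T h H t y : unif_cv T h H -> 0 <= t <= T ->
  (exists J, forall j, (J <= j)%nat -> h j t = y) -> H t = y.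
Proof.
  intros C Ht [J HJ].
  pose proof (unif_cv_const T y) as Cy.
  apply Rle_antisym.
  - apply (unif_limit_le T h _ H (fun _ => y) t t C Cy Ht Ht).
    exists J. intros j Hj. rewrite HJ; auto; lra.
  - apply (unif_limit_le T _ h (fun _ => y) H t t Cy C Ht Ht).
    exists J. intros j Hj. rewrite HJ; auto; lra.
Qed.

Lemma unif_limit_lipschitz T L h H : unif_cv T h H ->
  (forall j s t, 0 <= s <= T -> 0 <= t <= T -> Rabs (h j t - h j s) <= L * Rabs (t - s)) ->
  forall s t, 0 <= s <= T -> 0 <= t <= T -> Rabs (H t - H s) <= L * Rabs (t - s).
Proof.
  intros C HL s t Hs Ht. apply Rle_plus_epsilon. intros e He.
  destruct (C (e / 2) ltac:(lra)) as [J HJ].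
  pose proof (HJ J (le_n J) t Ht). pose proof (HJ J (le_n J) s Hs). pose proof (HL J s t Hs Ht).
  replace (H t - H s) with (- (h J t - H t) + (h J t - h J s) + (h J s - H s)) by ring.
  eapply Rle_trans; [apply Rabs_triang3|]. rewrite Rabs_Ropp. lra.
Qed.

(* A uniform limit of fluid-scaled paths whose increments eventually vanish on a
   neighbourhood of [t0] is locally constant there. *)
Lemma unif_limit_scaled_deriv0 T (r : nat -> nat) (x : nat -> nat -> R) H t0 l :
  (forall j, (0 < r j)%nat) -> unif_cv T (fun j => scaled (r j) (x j)) H -> 0 < t0 < T ->
  (exists rho J, 0 < rho /\ rho <= t0 /\ rho <= T - t0 /\ forall j, (J <= j)%nat ->
     / INR (r j) < rho / 2 /\
     forall tau : nat, t0 - rho <= INR tau / INR (r j) <= t0 + rho -> x j (S tau) = x j tau) ->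
  derivable_pt_lim H t0 l -> l = 0.
Proof.
  intros Hr C Ht0 [rho [J [Hrho [Hr1 [Hr2 HJ]]]]].
  apply (derivable_pt_lim_locally_const H t0 l (rho / 2)); [lra|]. intros u Hu.
  assert (Hu' : 0 <= u <= T) by (apply Rabs_lt_inv in Hu; lra).
  assert (Heq : forall j, (J <= j)%nat -> scaled (r j) (x j) u = scaled (r j) (x j) t0).
  { intros j Hj. destruct (HJ j Hj) as [Hinv Hc]. apply (scaled_window _ _ t0 rho); auto; lra. }
  apply Rle_antisym; apply (unif_limit_le T _ _ _ _ _ _ C C); auto; try lra;
    exists J; intros j Hj; rewrite Heq; auto; lra.
Qed.

(** * Sample paths of the network *)

Lemma IminusRT_minus N Rm v w n :
  IminusRT N Rm v n - IminusRT N Rm w n = IminusRT N Rm (fun m => v m - w m) n.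
Proof.
  unfold IminusRT.
  rewrite (rsum_ext N (fun m => Rm m n * (v m - w m)) (fun m => Rm m n * v m - Rm m n * w m))
    by (intros; ring).
  rewrite rsum_minus. ring.
Qed.

Section Network.
Variables (N K : nat) (sched : nat -> nat -> R) (Rm : nat -> nat -> R) (f : R -> R).
Variables (A Q Y : nat -> nat -> R) (sig : nat -> nat).
Hypothesis HS : forall k n, (k < K)%nat -> (n < N)%nat -> 0 <= sched k n.
Hypothesis HR01 : forall i j, (i < N)%nat -> (j < N)%nat -> Rm i j = 0 \/ Rm i j = 1.
Hypothesis Hnet : MW_network N K sched Rm f A Q Y sig.
Hypothesis HAmono : forall tau n, (n < N)%nat -> A tau n <= A (S tau) n.
Hypothesis HQ0 : forall n, (n < N)%nat -> 0 <= Q O n.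

Lemma count_step k tau :
  INR (count_sched sig k (S tau)) - INR (count_sched sig k tau) = if Nat.eqb (sig tau) k then 1 else 0.
Proof. simpl. rewrite plus_INR. destruct (Nat.eqb (sig tau) k); simpl; ring. Qed.

Lemma count_incr k tau : 0 <= INR (count_sched sig k (S tau)) - INR (count_sched sig k tau) <= 1.
Proof. rewrite count_step. destruct (Nat.eqb (sig tau) k); lra. Qed.

Lemma count_total tau : rsum K (fun k => INR (count_sched sig k tau)) = INR tau.
Proof.
  destruct Hnet as [_ [_ [Hsig _]]]. induction tau as [|tau IH]; [simpl; rewrite rsum_const; ring|].
  rewrite (rsum_ext _ _ (fun k => INR (count_sched sig k tau) + if Nat.eqb (sig tau) k then 1 else 0)).
  - rewrite rsum_plus, IH, rsum_delta, S_INR by auto. reflexivity.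
  - intros i _. pose proof (count_step i tau). lra.
Qed.

Lemma Bproc_count tau m :
  Bproc sched sig tau m = rsum K (fun k => INR (count_sched sig k tau) * sched k m).
Proof.
  destruct Hnet as [_ [_ [Hsig _]]]. unfold Bproc. induction tau as [|tau IH].
  - simpl. rewrite (rsum_ext K _ (fun _ => 0)), rsum_const by (intros; simpl; ring). ring.
  - simpl rsum at 1. rewrite IH.
    rewrite (rsum_ext K (fun k => INR (count_sched sig k (S tau)) * sched k m)
               (fun k => INR (count_sched sig k tau) * sched k m
                         + if Nat.eqb (sig tau) k then sched k m else 0)).
    + rewrite rsum_plus, rsum_delta by auto. reflexivity.
    + intros i _. pose proof (count_step i tau). destruct (Nat.eqb (sig tau) i); nra.
Qed.

(* Unused service [Y] is exactly what makes the served amount [min (pi_n, Q_n)]. *)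
Lemma Q_step tau n : (n < N)%nat ->
  Q (S tau) n = Q tau n + (A (S tau) n - A tau n)
                - IminusRT N Rm (fun m => Rmin (sched (sig tau) m) (Q tau m)) n.
Proof.
  intros Hn. destruct Hnet as [_ [_ [_ [HY [HQ _]]]]].
  rewrite (HQ (S tau) n Hn), (HQ tau n Hn).
  enough (IminusRT N Rm (fun m => Bproc sched sig (S tau) m - Y (S tau) m) n
          - IminusRT N Rm (fun m => Bproc sched sig tau m - Y tau m) n
          = IminusRT N Rm (fun m => Rmin (sched (sig tau) m) (Q tau m)) n) by lra.
  rewrite IminusRT_minus. unfold IminusRT. f_equal.
  - pose proof (HY tau n Hn). unfold Bproc, Rmin, Rmax in *. simpl rsum.
    destruct (Rle_dec (sched (sig tau) n) (Q tau n));
      destruct (Rle_dec (sched (sig tau) n - Q tau n) 0); lra.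
  - apply rsum_ext. intros m Hm. pose proof (HY tau m Hm). unfold Bproc, Rmin, Rmax in *. simpl rsum.
    destruct (Rle_dec (sched (sig tau) m) (Q tau m));
      destruct (Rle_dec (sched (sig tau) m - Q tau m) 0); f_equal; lra.
Qed.

Lemma Q_nonneg tau n : (n < N)%nat -> 0 <= Q tau n.
Proof.
  destruct Hnet as [_ [_ [Hsig _]]]. revert n. induction tau as [|tau IH]; intros n Hn; auto.
  rewrite Q_step by auto. unfold IminusRT.
  assert (0 <= rsum N (fun m => Rm m n * Rmin (sched (sig tau) m) (Q tau m))).
  { apply rsum_nonneg. intros m Hm. apply Rmult_le_pos; [destruct (HR01 m n Hm Hn); lra|].
    apply Rmin_glb; [apply HS | apply IH]; auto. }
  pose proof (Rmin_r (sched (sig tau) n) (Q tau n)). pose proof (HAmono tau n Hn). lra.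
Qed.

Lemma Y_incr tau n : (n < N)%nat -> 0 <= Y (S tau) n - Y tau n <= sched (sig tau) n.
Proof.
  intros Hn. destruct Hnet as [_ [_ [Hsig [HY _]]]]. rewrite HY by auto.
  pose proof (Q_nonneg tau n Hn). pose proof (HS (sig tau) n (Hsig tau) Hn).
  unfold Rmax. destruct (Rle_dec (sched (sig tau) n - Q tau n) 0); lra.
Qed.

Lemma Y_idle tau n : (n < N)%nat -> sched (sig tau) n <= Q tau n -> Y (S tau) n = Y tau n.
Proof.
  intros Hn Hq. destruct Hnet as [_ [_ [_ [HY _]]]].
  pose proof (HY tau n Hn). rewrite Rmax_right in * by lra. lra.
Qed.

Lemma Y_le_Bproc tau n : (n < N)%nat -> Y tau n <= Bproc sched sig tau n.
Proof.
  intros Hn. destruct Hnet as [_ [HY0 _]]. unfold Bproc. induction tau as [|tau IH].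
  - rewrite HY0 by auto. simpl. lra.
  - pose proof (Y_incr tau n Hn). simpl rsum. lra.
Qed.

Lemma scaled_Q r t n : (n < N)%nat ->
  scaled r (fun tau => Q tau n) t = Q O n / INR r + scaled r (fun tau => A tau n) t -
    IminusRT N Rm (fun m => rsum K (fun k => scaled r (fun tau => INR (count_sched sig k tau)) t * sched k m)
                           - scaled r (fun tau => Y tau m) t) n.
Proof.
  intros Hn. destruct Hnet as [_ [_ [_ [_ [HQ _]]]]].
  assert (HB : forall m, scaled r (fun tau => Bproc sched sig tau m) t
                 = rsum K (fun k => scaled r (fun tau => INR (count_sched sig k tau)) t * sched k m)).
  { intros m. rewrite (scaled_ext r _ _ t (fun tau => Bproc_count tau m)), scaled_rsum.
    apply rsum_ext. intros. apply scaled_mulr. }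
  rewrite (scaled_ext r _ (fun tau => (Q O n + A tau n) - ((Bproc sched sig tau n - Y tau n) -
     rsum N (fun m => Rm m n * (Bproc sched sig tau m - Y tau m))))) by (intros; apply HQ; auto).
  rewrite scaled_minus, scaled_plus, scaled_const, scaled_minus, scaled_rsum, scaled_minus, HB.
  unfold IminusRT. f_equal. f_equal. apply rsum_ext. intros m _.
  rewrite scaled_scal, scaled_minus, HB. reflexivity.
Qed.

End Network.

(** * Continuity of the MW-[f] objective *)

Section Weights.
Variables (N K : nat) (sched : nat -> nat -> R) (Rm : nat -> nat -> R) (f : R -> R).
Hypothesis HS : forall k n, (k < K)%nat -> (n < N)%nat -> 0 <= sched k n.
Hypothesis HR01 : forall i j, (i < N)%nat -> (j < N)%nat -> Rm i j = 0 \/ Rm i j = 1.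
Hypothesis Hf : f_standing f.

Definition sched_mass : R := rsum K (fun k => rsum N (fun n => sched k n)).

Lemma sched_mass_nonneg : 0 <= sched_mass.
Proof. apply rsum_nonneg. intros. apply rsum_nonneg. auto. Qed.

Lemma sched_le_mass k n : (k < K)%nat -> (n < N)%nat -> sched k n <= sched_mass.
Proof.
  intros Hk Hn. eapply Rle_trans; [apply (rsum_term_le N (fun n => sched k n)); auto|].
  apply (rsum_term_le K (fun k => rsum N (fun n => sched k n))); auto.
  intros. apply rsum_nonneg. auto.
Qed.

Lemma weight_diff q q' b n : (n < N)%nat ->
  (forall m, (m < N)%nat -> Rabs (f (q' m) - f (q m)) <= b) ->
  Rabs (weight N Rm f q' n - weight N Rm f q n) <= (1 + INR N) * b.
Proof.
  intros Hn Hb. unfold weight, IminusR.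
  replace (f (q' n) - rsum N (fun m => Rm n m * f (q' m)) - (f (q n) - rsum N (fun m => Rm n m * f (q m))))
    with ((f (q' n) - f (q n)) + - rsum N (fun m => Rm n m * (f (q' m) - f (q m)))).
  2:{ rewrite (rsum_ext N _ (fun m => Rm n m * f (q' m) - Rm n m * f (q m))) by (intros; ring).
      rewrite rsum_minus. ring. }
  eapply Rle_trans; [apply Rabs_triang|]. rewrite Rabs_Ropp.
  assert (rsum N (fun i => Rabs (Rm n i * (f (q' i) - f (q i)))) <= rsum N (fun _ => b)).
  { apply rsum_le. intros i Hi. rewrite Rabs_mult. pose proof (Hb i Hi).
    pose proof (Rabs_pos (f (q' i) - f (q i))).
    destruct (HR01 n i Hn Hi) as [E|E]; rewrite E, ?Rabs_R0, ?Rabs_R1; lra. }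
  pose proof (rsum_abs N (fun m => Rm n m * (f (q' m) - f (q m)))).
  rewrite rsum_const in *. pose proof (Hb n Hn). lra.
Qed.

Lemma dot_sched_diff (w w' : nat -> R) b k : (k < K)%nat -> 0 <= b ->
  (forall n, (n < N)%nat -> Rabs (w' n - w n) <= b) ->
  Rabs (dotN N (sched k) w' - dotN N (sched k) w) <= sched_mass * b.
Proof.
  intros Hk Hb0 Hb. unfold dotN. rewrite <- rsum_minus.
  eapply Rle_trans; [apply rsum_abs|].
  apply Rle_trans with (rsum N (fun n => b * sched k n)).
  - apply rsum_le. intros n Hn.
    replace (sched k n * w' n - sched k n * w n) with (sched k n * (w' n - w n)) by ring.
    rewrite Rabs_mult, Rabs_right by (apply Rle_ge; auto).
    rewrite Rmult_comm. apply Rmult_le_compat_r; auto.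
  - rewrite rsum_scal, Rmult_comm. apply Rmult_le_compat_r; auto.
    apply (rsum_term_le K (fun k => rsum N (fun n => sched k n))); auto.
    intros. apply rsum_nonneg. auto.
Qed.

Lemma dot_weight_continuous (q0 : nat -> R) : (forall n, (n < N)%nat -> 0 <= q0 n) ->
  forall e, 0 < e -> exists rho, 0 < rho /\ forall q' : nat -> R,
    (forall n, (n < N)%nat -> 0 <= q' n /\ Rabs (q' n - q0 n) < rho) ->
    forall k, (k < K)%nat ->
      Rabs (dotN N (sched k) (weight N Rm f q') - dotN N (sched k) (weight N Rm f q0)) < e.
Proof.
  intros Hq0 e He. pose proof sched_mass_nonneg.
  assert (HN : 0 < 1 + INR N) by (pose proof (pos_INR N); lra).
  set (e' := e / ((sched_mass + 1) * (1 + INR N))).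
  assert (He' : 0 < e') by (unfold e'; apply Rdiv_lt_0_compat; [lra | nra]).
  destruct (fin_min_pos N (fun n rho => forall y, 0 <= y -> Rabs (y - q0 n) < rho ->
      Rabs (f y - f (q0 n)) < e')) as [rho [Hr Hrho]].
  { intros c x y Hx Hxy Hy z Hz Hzc. apply Hy; auto; lra. }
  { intros c Hc. apply (f_standing_continuous f Hf (q0 c) (Hq0 c Hc) e' He'). }
  exists rho. split; auto. intros q' Hq' k Hk.
  eapply Rle_lt_trans.
  - apply (dot_sched_diff _ _ ((1 + INR N) * e')); [auto | nra|].
    intros n Hn. apply weight_diff; auto. intros m Hm. left.
    destruct (Hq' m Hm). apply Hrho; auto.
  - replace (sched_mass * ((1 + INR N) * e')) with (e * (sched_mass / (sched_mass + 1)))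
      by (unfold e'; field; lra).
    assert (sched_mass / (sched_mass + 1) < 1).
    { apply (Rmult_lt_reg_r (sched_mass + 1)); [lra|].
      unfold Rdiv. rewrite Rmult_assoc, Rinv_l by lra. lra. }
    nra.
Qed.

Lemma non_maximizer_stable (q0 : nat -> R) k : (forall n, (n < N)%nat -> 0 <= q0 n) ->
  (k < K)%nat -> ~ is_maximizer N K sched Rm f q0 k ->
  exists rho, 0 < rho /\ forall q' : nat -> R,
    (forall n, (n < N)%nat -> 0 <= q' n /\ Rabs (q' n - q0 n) < rho) ->
    ~ is_maximizer N K sched Rm f q' k.
Proof.
  intros Hq0 Hk Hnm.
  assert (Hbetter : exists k', (k' < K)%nat /\
      dotN N (sched k) (weight N Rm f q0) < dotN N (sched k') (weight N Rm f q0)).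
  { apply NNPP. intros Hc. apply Hnm. split; auto. intros k' Hk'.
    apply Rnot_lt_le. intros Hlt. apply Hc. exists k'. auto. }
  destruct Hbetter as [k' [Hk' Hgap]].
  set (gap := dotN N (sched k') (weight N Rm f q0) - dotN N (sched k) (weight N Rm f q0)).
  destruct (dot_weight_continuous q0 Hq0 (gap / 2) ltac:(unfold gap; lra)) as [rho [Hrho Hc]].
  exists rho. split; auto. intros q' Hq' [_ Hmax].
  pose proof (Rabs_lt_inv _ _ (Hc q' Hq' k Hk)). pose proof (Rabs_lt_inv _ _ (Hc q' Hq' k' Hk')).
  specialize (Hmax k' Hk'). unfold gap in *. lra.
Qed.

End Weights.

Lemma scaled_arrivals_close N (A : nat -> nat -> R) (lam : nat -> R) (T eta : R) (mm r : nat) :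
  (0 < r)%nat -> 0 <= T -> T + 1 <= INR mm ->
  (forall tau n, (tau <= mm * r)%nat -> (n < N)%nat -> Rabs (A tau n - lam n * INR tau) <= eta * INR r) ->
  forall t n, 0 <= t <= T -> (n < N)%nat -> Rabs (scaled r (fun tau => A tau n) t - lam n * t) <= eta.
Proof.
  intros Hr HT Hmm HA t n Ht Hn. assert (HR : 0 < INR r) by (apply lt_0_INR; auto).
  assert (HR1 : 1 <= INR r) by (apply (le_INR 1); lia).
  rewrite (scaled_ext r _ (fun tau => (A tau n - lam n * INR tau) + lam n * INR tau)) by (intros; ring).
  rewrite scaled_plus, scaled_scal, scaled_id by auto.
  replace (scaled r (fun tau => A tau n - lam n * INR tau) t + lam n * t - lam n * t)
    with (scaled r (fun tau => A tau n - lam n * INR tau) t) by ring.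
  unfold scaled. assert (Hz : 0 <= INR r * t) by nra.
  destruct (floor_nat_spec _ Hz) as [F1 F2].
  assert (Hb : forall tau, INR tau <= INR r * T + 1 ->
                 - (eta * INR r) <= A tau n - lam n * INR tau <= eta * INR r).
  { intros tau Htau. apply Rabs_le_inv, HA; auto. apply INR_le. rewrite mult_INR. nra. }
  pose proof (interp_between (fun tau => A tau n - lam n * INR tau) (INR r * t)
    (- (eta * INR r)) (eta * INR r) Hz (Hb (floor_nat (INR r * t)) ltac:(nra))
    (Hb (S (floor_nat (INR r * t))) ltac:(rewrite S_INR; nra))) as I.
  unfold Rdiv. rewrite Rabs_mult, Rabs_inv, (Rabs_right (INR r)) by lra.
  apply (Rmult_le_reg_r (INR r)); auto. rewrite Rmult_assoc, Rinv_l, Rmult_1_r by lra.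
  apply Rabs_le. lra.
Qed.

(** * Fluid limits *)

Section FluidLimit.
Variables (N K : nat) (sched : nat -> nat -> R) (Rm : nat -> nat -> R) (f : R -> R).
Hypothesis HS : forall k n, (k < K)%nat -> (n < N)%nat -> 0 <= sched k n.
Hypothesis HR01 : forall i j, (i < N)%nat -> (j < N)%nat -> Rm i j = 0 \/ Rm i j = 1.
Hypothesis Hf : f_standing f.
Hypothesis Hscale : scale_invariance N K sched Rm f.
Variables (lam : nat -> R) (T : R) (mm : nat).
Hypothesis HT : 0 < T.
Hypothesis Hmm : T + 1 <= INR mm.

(* [T + 1 <= mm]: the deviation window [0, mm r] covers the stretched horizon [0, r T]
   together with the interpolation point after it. *)
Record regular_sample (r : nat) (eta : R) (A Q Y : nat -> nat -> R) (sig : nat -> nat) : Prop := {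
  rs_net : MW_network N K sched Rm f A Q Y sig;
  rs_Q0 : forall n, (n < N)%nat -> 0 <= Q O n <= eta * INR r;
  rs_A_mono : forall tau n, (n < N)%nat -> A tau n <= A (S tau) n;
  rs_A_dev : forall tau n, (tau <= mm * r)%nat -> (n < N)%nat ->
    Rabs (A tau n - lam n * INR tau) <= eta * INR r }.

Arguments rs_net {r eta A Q Y sig}.
Arguments rs_Q0 {r eta A Q Y sig}.
Arguments rs_A_mono {r eta A Q Y sig}.
Arguments rs_A_dev {r eta A Q Y sig}.

(* Lipschitz constant of the scaled schedule counts (slope at most 1) and unused
   services (slope at most any service rate, hence at most [sched_mass]). *)
Let L : R := 1 + sched_mass N K sched.

Lemma L_ge_1 : 1 <= L.
Proof. pose proof (sched_mass_nonneg N K sched HS). unfold L. lra. Qed.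

Lemma regular_Q_nonneg {r eta A Q Y sig} : regular_sample r eta A Q Y sig ->
  forall tau n, (n < N)%nat -> 0 <= Q tau n.
Proof.
  intros Hp. apply (Q_nonneg N K sched Rm f A Q Y sig HS HR01 (rs_net Hp) (rs_A_mono Hp)).
  intros m Hm. apply (rs_Q0 Hp m Hm).
Qed.

Lemma regular_Y_incr {r eta A Q Y sig} : regular_sample r eta A Q Y sig ->
  forall tau n, (n < N)%nat -> 0 <= Y (S tau) n - Y tau n <= L.
Proof.
  intros Hp tau n Hn.
  pose proof (Y_incr N K sched Rm f A Q Y sig HS HR01 (rs_net Hp) (rs_A_mono Hp)
    (fun m Hm => proj1 (rs_Q0 Hp m Hm)) tau n Hn).
  destruct (rs_net Hp) as [_ [_ [Hsig _]]].
  pose proof (sched_le_mass N K sched HS _ n (Hsig tau) Hn). unfold L. lra.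
Qed.

Section Limit.
Variables (r : nat -> nat) (eta : nat -> R).
Variables (As Qs Ys : nat -> nat -> nat -> R) (sigs : nat -> nat -> nat).
Hypothesis Hreg : forall j, regular_sample (r j) (eta j) (As j) (Qs j) (Ys j) (sigs j).
Hypothesis Hrpos : forall j, (0 < r j)%nat.
Hypothesis Hsmall : forall e, 0 < e -> exists J, forall j, (J <= j)%nat -> eta j < e /\ / INR (r j) < e.

Definition s_seq (j k : nat) : R -> R := scaled (r j) (fun tau => INR (count_sched (sigs j) k tau)).
Definition y_seq (j n : nat) : R -> R := scaled (r j) (fun tau => Ys j tau n).
Definition q_seq (j n : nat) : R -> R := scaled (r j) (fun tau => Qs j tau n).
Definition a_seq (j n : nat) : R -> R := scaled (r j) (fun tau => As j tau n).

Variables (s_lim y_lim : nat -> R -> R).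
Hypothesis Hs_cv : forall k, (k < K)%nat -> unif_cv T (fun j => s_seq j k) (s_lim k).
Hypothesis Hy_cv : forall n, (n < N)%nat -> unif_cv T (fun j => y_seq j n) (y_lim n).

Definition v_lim (m : nat) (t : R) : R := rsum K (fun k => s_lim k t * sched k m) - y_lim m t.
Definition q_lim (n : nat) (t : R) : R := lam n * t - IminusRT N Rm (fun m => v_lim m t) n.

Definition fluid_lim : fluid_path :=
  {| fq := fun t n => q_lim n t; fa := fun t n => lam n * t;
     fy := fun t n => y_lim n t; fs := fun t k => s_lim k t |}.

Lemma count_seq_incr j k tau :
  0 <= INR (count_sched (sigs j) k (S tau)) - INR (count_sched (sigs j) k tau) <= L.
Proof. pose proof (count_incr (sigs j) k tau). pose proof L_ge_1. lra. Qed.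

Lemma s_lim_lipschitz k : (k < K)%nat -> lipschitz_on T (s_lim k).
Proof.
  intros Hk. exists L. split; [pose proof L_ge_1; lra|].
  apply (unif_limit_lipschitz T L _ _ (Hs_cv k Hk)). intros j s t Hs Ht.
  apply scaled_lipschitz; [auto | apply count_seq_incr | lra | lra].
Qed.

Lemma y_lim_lipschitz n : (n < N)%nat -> lipschitz_on T (y_lim n).
Proof.
  intros Hn. exists L. split; [pose proof L_ge_1; lra|].
  apply (unif_limit_lipschitz T L _ _ (Hy_cv n Hn)). intros j s t Hs Ht.
  apply scaled_lipschitz; [auto | intros; apply (regular_Y_incr (Hreg j)); auto | lra | lra].
Qed.

Lemma s_lim_mono k : (k < K)%nat -> nondecr_on T (s_lim k).
Proof.
  intros Hk s t Hs Hst Ht. apply (unif_limit_le T _ _ _ _ s t (Hs_cv k Hk) (Hs_cv k Hk)); try lra.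
  exists O. intros j _. pose proof (scaled_incr _ _ L (Hrpos j) (count_seq_incr j k) s t Hs Hst).
  unfold s_seq. lra.
Qed.

Lemma y_lim_mono n : (n < N)%nat -> nondecr_on T (y_lim n).
Proof.
  intros Hn s t Hs Hst Ht. apply (unif_limit_le T _ _ _ _ s t (Hy_cv n Hn) (Hy_cv n Hn)); try lra.
  exists O. intros j _.
  pose proof (scaled_incr _ _ L (Hrpos j) (fun tau => regular_Y_incr (Hreg j) tau n Hn) s t Hs Hst).
  unfold y_seq. lra.
Qed.

Lemma s_lim_0 k : (k < K)%nat -> s_lim k 0 = 0.
Proof.
  intros Hk. apply (unif_limit_value T _ _ 0 0 (Hs_cv k Hk)); [lra|].
  exists O. intros j _. unfold s_seq. rewrite scaled_zero. simpl. unfold Rdiv. ring.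
Qed.

Lemma y_lim_0 n : (n < N)%nat -> y_lim n 0 = 0.
Proof.
  intros Hn. apply (unif_limit_value T _ _ 0 0 (Hy_cv n Hn)); [lra|].
  exists O. intros j _. unfold y_seq. rewrite scaled_zero.
  destruct (rs_net (Hreg j)) as [_ [HY0 _]]. rewrite HY0 by auto. unfold Rdiv. ring.
Qed.

Lemma s_lim_total t : 0 <= t <= T -> rsum K (fun k => s_lim k t) = t.
Proof.
  intros Ht.
  apply (unif_limit_value T (fun j t => rsum K (fun k => s_seq j k t))
           (fun t => rsum K (fun k => s_lim k t))); auto.
  - apply (unif_cv_rsum T K (fun j k t => s_seq j k t)). exact Hs_cv.
  - exists O. intros j _. unfold s_seq. rewrite <- scaled_rsum.
    rewrite (scaled_ext _ _ INR)
      by (intros; apply (count_total N K sched Rm f (As j) (Qs j) (Ys j) (sigs j) (rs_net (Hreg j)))).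
    apply scaled_id. auto.
Qed.

Lemma served_cv m : unif_cv T (fun j t => rsum K (fun k => s_seq j k t * sched k m))
                              (fun t => rsum K (fun k => s_lim k t * sched k m)).
Proof.
  apply (unif_cv_rsum T K (fun j k t => s_seq j k t * sched k m) (fun k t => s_lim k t * sched k m)).
  intros k Hk.
  apply (unif_cv_ext T (fun j t => sched k m * s_seq j k t) _ (fun t => sched k m * s_lim k t));
    [intros; ring | intros; ring|].
  apply unif_cv_scal, Hs_cv. auto.
Qed.

Lemma v_cv m : (m < N)%nat ->
  unif_cv T (fun j t => rsum K (fun k => s_seq j k t * sched k m) - y_seq j m t) (v_lim m).
Proof. intros Hm. apply unif_cv_minus; [apply served_cv | apply Hy_cv; auto]. Qed.

Lemma y_lim_le_served n t : (n < N)%nat -> 0 <= t <= T ->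
  y_lim n t <= rsum K (fun k => s_lim k t * sched k n).
Proof.
  intros Hn Ht. apply (unif_limit_le T _ _ _ _ t t (Hy_cv n Hn) (served_cv n) Ht Ht).
  exists O. intros j _. pose proof (rs_net (Hreg j)) as Hnet.
  assert (E : rsum K (fun k => s_seq j k t * sched k n)
              = scaled (r j) (fun tau => Bproc sched (sigs j) tau n) t).
  { rewrite (scaled_ext (r j) _ _ t
      (fun tau => Bproc_count N K sched Rm f (As j) (Qs j) (Ys j) (sigs j) Hnet tau n)).
    rewrite scaled_rsum. apply rsum_ext. intros k _. unfold s_seq. symmetry. apply scaled_mulr. }
  assert (0 <= scaled (r j) (fun tau => Bproc sched (sigs j) tau n - Ys j tau n) t).
  { apply scaled_nonneg; [auto | | lra]. intros tau.
    pose proof (Y_le_Bproc N K sched Rm f (As j) (Qs j) (Ys j) (sigs j) HS HR01 Hnet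
      (rs_A_mono (Hreg j)) (fun m Hm => proj1 (rs_Q0 (Hreg j) m Hm)) tau n Hn). lra. }
  rewrite scaled_minus in *. rewrite E. unfold y_seq. lra.
Qed.

Lemma initial_vanishes n : (n < N)%nat -> unif_cv T (fun j _ => Qs j O n / INR (r j)) (fun _ => 0).
Proof.
  intros Hn e He. destruct (Hsmall e He) as [J HJ]. exists J. intros j Hj _ _.
  destruct (HJ j Hj) as [Heta _]. destruct (rs_Q0 (Hreg j) n Hn) as [H0 H1].
  assert (0 < INR (r j)) by (apply lt_0_INR; auto).
  rewrite Rminus_0_r, Rabs_right.
  - apply (Rmult_le_reg_r (INR (r j))); auto. unfold Rdiv. rewrite Rmult_assoc, Rinv_l by lra. nra.
  - apply Rle_ge, Rmult_le_pos; [lra | left; apply Rinv_0_lt_compat; lra].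
Qed.

Lemma arrivals_cv n : (n < N)%nat -> unif_cv T (fun j => a_seq j n) (fun t => lam n * t).
Proof.
  intros Hn e He. destruct (Hsmall e He) as [J HJ]. exists J. intros j Hj t Ht.
  destruct (HJ j Hj) as [Heta _]. unfold a_seq.
  pose proof (scaled_arrivals_close N (As j) lam T (eta j) mm (r j) (Hrpos j) ltac:(lra) Hmm
    (rs_A_dev (Hreg j)) t n Ht Hn). lra.
Qed.

Lemma q_seq_cv n : (n < N)%nat -> unif_cv T (fun j => q_seq j n) (q_lim n).
Proof.
  intros Hn. set (vs := fun j m t => rsum K (fun k => s_seq j k t * sched k m) - y_seq j m t).
  apply (unif_cv_ext T
    (fun j t => Qs j O n / INR (r j) + a_seq j n t - (vs j n t - rsum N (fun m => Rm m n * vs j m t))) _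
    (fun t => 0 + lam n * t - (v_lim n t - rsum N (fun m => Rm m n * v_lim m t)))).
  - intros j t _. unfold q_seq.
    rewrite (scaled_Q N K sched Rm f (As j) (Qs j) (Ys j) (sigs j) (rs_net (Hreg j))) by auto.
    reflexivity.
  - intros t _. unfold q_lim, IminusRT. ring.
  - apply unif_cv_minus; [apply unif_cv_plus; [apply initial_vanishes | apply arrivals_cv]; auto|].
    apply unif_cv_minus; [apply v_cv; auto|].
    apply (unif_cv_rsum T N (fun j m t => Rm m n * vs j m t) (fun m t => Rm m n * v_lim m t)).
    intros m Hm. apply unif_cv_scal, v_cv. auto.
Qed.

Lemma v_lim_lipschitz m : (m < N)%nat -> lipschitz_on T (v_lim m).
Proof.
  intros Hm. apply lipschitz_minus; [|apply y_lim_lipschitz; auto].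
  apply lipschitz_rsum. intros k Hk.
  apply (lipschitz_ext T (fun t => sched k m * s_lim k t)); [intros; ring|].
  apply lipschitz_scal, s_lim_lipschitz. auto.
Qed.

Lemma q_lim_lipschitz n : (n < N)%nat -> lipschitz_on T (q_lim n).
Proof.
  intros Hn. unfold q_lim, IminusRT. apply lipschitz_minus; [apply lipschitz_linear|].
  apply lipschitz_minus; [apply v_lim_lipschitz; auto|].
  apply lipschitz_rsum. intros m Hm. apply lipschitz_scal, v_lim_lipschitz. auto.
Qed.

Lemma q_lim_nonneg n t : (n < N)%nat -> 0 <= t <= T -> 0 <= q_lim n t.
Proof.
  intros Hn Ht.
  apply (unif_limit_le T (fun _ _ => 0) _ (fun _ => 0) _ t t (unif_cv_const T 0) (q_seq_cv n Hn) Ht Ht).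
  exists O. intros j _. apply scaled_nonneg; [auto | intros; apply (regular_Q_nonneg (Hreg j)); auto | lra].
Qed.

Lemma As_nonneg j tau n : (n < N)%nat -> 0 <= As j tau n.
Proof.
  intros Hn. induction tau as [|tau IH].
  - destruct (rs_net (Hreg j)) as [HA0 _]. rewrite HA0 by auto. lra.
  - pose proof (rs_A_mono (Hreg j) tau n Hn). lra.
Qed.

Lemma arrivals_lim_nonneg n t : (n < N)%nat -> 0 <= t <= T -> 0 <= lam n * t.
Proof.
  intros Hn Ht.
  apply (unif_limit_le T (fun _ _ => 0) _ (fun _ => 0) _ t t (unif_cv_const T 0) (arrivals_cv n Hn) Ht Ht).
  exists O. intros j _. apply scaled_nonneg; [auto | intros; apply As_nonneg; auto | lra].
Qed.

Lemma v_lim_0 m : (m < N)%nat -> v_lim m 0 = 0.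
Proof.
  intros Hm. unfold v_lim. rewrite y_lim_0 by auto.
  rewrite (rsum_ext K _ (fun _ => 0)); [rewrite rsum_const; ring|].
  intros k Hk. rewrite s_lim_0 by auto. ring.
Qed.

Lemma q_lim_0 n : (n < N)%nat -> q_lim n 0 = 0.
Proof.
  intros Hn. unfold q_lim, IminusRT. rewrite v_lim_0 by auto.
  rewrite (rsum_ext N _ (fun _ => 0)); [rewrite rsum_const; ring|].
  intros m Hm. rewrite v_lim_0 by auto. ring.
Qed.

Lemma Rmin3_bounds a b c : Rmin (Rmin a b) c <= a /\ Rmin (Rmin a b) c <= b /\ Rmin (Rmin a b) c <= c.
Proof.
  pose proof (Rmin_l (Rmin a b) c). pose proof (Rmin_r (Rmin a b) c).
  pose proof (Rmin_l a b). pose proof (Rmin_r a b). lra.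
Qed.

Lemma q_seq_near t0 e : 0 < t0 < T -> 0 < e ->
  exists rho J, 0 < rho /\ rho <= t0 /\ rho <= T - t0 /\ forall j, (J <= j)%nat ->
    / INR (r j) < rho / 2 /\
    forall tau n, (n < N)%nat -> t0 - rho <= INR tau / INR (r j) <= t0 + rho ->
      Rabs (Qs j tau n / INR (r j) - q_lim n t0) <= e.
Proof.
  intros Ht0 He.
  destruct (fin_min_pos N (fun n x => forall u, 0 <= u <= T -> Rabs (u - t0) <= x ->
      Rabs (q_lim n u - q_lim n t0) <= e / 2)) as [rho1 [Hr1 Hnear]].
  { intros c x y Hx Hxy Hy u Hu Hut. apply Hy; auto; lra. }
  { intros n Hn. destruct (lipschitz_near T _ t0 (q_lim_lipschitz n Hn) (e / 2)) as [rho [Hrho Hl]];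
      [lra|]. exists rho. split; auto. intros u Hu Hut. apply Hl; auto; lra. }
  set (rho := Rmin (Rmin t0 (T - t0)) rho1).
  assert (Hrho : 0 < rho) by (unfold rho; repeat apply Rmin_pos; lra).
  destruct (Rmin3_bounds t0 (T - t0) rho1) as [B1 [B2 B3]]. fold rho in B1, B2, B3.
  destruct (unif_cv_fin T N (fun j n => q_seq j n) q_lim q_seq_cv (e / 2) ltac:(lra)) as [J1 HJ1].
  destruct (Hsmall (rho / 2) ltac:(lra)) as [J2 HJ2].
  exists rho, (max J1 J2). do 3 (split; [auto|]). intros j Hj.
  split; [apply HJ2; lia|]. intros tau n Hn Htau.
  set (p := INR tau / INR (r j)) in *. assert (Hp : 0 <= p <= T) by lra.
  pose proof (HJ1 j ltac:(lia) p Hp n Hn) as Q1. unfold q_seq, p in Q1.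
  rewrite scaled_grid in Q1 by auto. fold p in Q1.
  assert (Q2 : Rabs (q_lim n p - q_lim n t0) <= e / 2) by (apply Hnear; auto; apply Rabs_le; lra).
  replace (Qs j tau n / INR (r j) - q_lim n t0)
    with ((Qs j tau n / INR (r j) - q_lim n p) + (q_lim n p - q_lim n t0)) by ring.
  eapply Rle_trans; [apply Rabs_triang | lra].
Qed.

(* Where the fluid queue is positive, the sampled queues exceed every service rate,
   so no service is wasted. *)
Lemma y_lim_deriv0 t0 n l : 0 < t0 < T -> (n < N)%nat ->
  derivable_pt_lim (y_lim n) t0 l -> 0 < q_lim n t0 -> l = 0.
Proof.
  intros Ht0 Hn Hder Hq.
  apply (unif_limit_scaled_deriv0 T r (fun j tau => Ys j tau n) (y_lim n) t0 l Hrpos (Hy_cv n Hn) Ht0);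
    auto.
  pose proof L_ge_1. remember (q_lim n t0) as c0.
  destruct (q_seq_near t0 (c0 / 2) Ht0 ltac:(lra)) as [rho [J [Hrho [H1 [H2 HJ]]]]].
  destruct (Hsmall (c0 / (2 * L)) ltac:(apply Rdiv_lt_0_compat; lra)) as [J' HJ'].
  exists rho, (max J J'). do 3 (split; [auto|]). intros j Hj.
  destruct (HJ j ltac:(lia)) as [Hinv Hnear]. split; auto. intros tau Htau.
  pose proof (rs_net (Hreg j)) as Hnet.
  apply (Y_idle N K sched Rm f (As j) (Qs j) (Ys j) (sigs j) Hnet tau n Hn).
  destruct Hnet as [_ [_ [Hsig _]]].
  pose proof (sched_le_mass N K sched HS _ n (Hsig tau) Hn).
  pose proof (Rabs_le_inv _ _ (Hnear tau n Hn Htau)).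
  destruct (HJ' j ltac:(lia)) as [_ Hr]. assert (HR : 0 < INR (r j)) by (apply lt_0_INR; auto).
  assert (Hbig : 2 * L < INR (r j) * c0).
  { apply (Rmult_lt_compat_l (INR (r j))) in Hr; auto. rewrite Rinv_r in Hr by lra.
    apply (Rmult_lt_compat_r (2 * L)) in Hr; [|lra].
    replace (INR (r j) * (c0 / (2 * L)) * (2 * L)) with (INR (r j) * c0) in Hr by (field; lra). lra. }
  assert (c0 / 2 * INR (r j) <= Qs j tau n).
  { replace (Qs j tau n) with (Qs j tau n / INR (r j) * INR (r j)) by (field; lra).
    apply Rmult_le_compat_r; lra. }
  unfold L in *. lra.
Qed.

(* A schedule that is not a maximizer at [q(t0)] is, by continuity and scale invariance,
   never chosen by the late samples near [t0]. *)
Lemma s_lim_deriv0 t0 k l : 0 < t0 < T -> (k < K)%nat ->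
  derivable_pt_lim (s_lim k) t0 l -> ~ is_maximizer N K sched Rm f (fun n => q_lim n t0) k -> l = 0.
Proof.
  intros Ht0 Hk Hder Hnm.
  destruct (non_maximizer_stable N K sched Rm f HS HR01 Hf (fun n => q_lim n t0) k
    (fun n Hn => q_lim_nonneg n t0 Hn ltac:(lra)) Hk Hnm) as [rq [Hrq Hstab]].
  apply (unif_limit_scaled_deriv0 T r (fun j tau => INR (count_sched (sigs j) k tau)) (s_lim k) t0 l
    Hrpos (Hs_cv k Hk) Ht0); auto.
  destruct (q_seq_near t0 (rq / 2) Ht0 ltac:(lra)) as [rho [J [Hrho [H1 [H2 HJ]]]]].
  exists rho, J. do 3 (split; [auto|]). intros j Hj.
  destruct (HJ j Hj) as [Hinv Hnear]. split; auto. intros tau Htau.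
  assert (HR : 0 < INR (r j)) by (apply lt_0_INR; auto).
  assert (Hne : sigs j tau <> k).
  { intros Heq. apply (Hstab (fun n => / INR (r j) * Qs j tau n)).
    - intros n Hn. split.
      + apply Rmult_le_pos; [left; apply Rinv_0_lt_compat; lra | apply (regular_Q_nonneg (Hreg j)); auto].
      + pose proof (Hnear tau n Hn Htau). rewrite Rmult_comm. unfold Rdiv in *. lra.
    - destruct (rs_net (Hreg j)) as [_ [_ [_ [_ [_ Hmax]]]]]. rewrite <- Heq.
      apply Hscale; [intros; apply (regular_Q_nonneg (Hreg j)); auto | apply Hmax |].
      left. apply Rinv_0_lt_compat. lra. }
  cbn [count_sched]. destruct (Nat.eqb_spec (sigs j tau) k); [contradiction|].
  rewrite Nat.add_0_r. reflexivity.
Qed.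

Lemma s_lim_nonneg k t : (k < K)%nat -> 0 <= t <= T -> 0 <= s_lim k t.
Proof. intros Hk Ht. rewrite <- (s_lim_0 k Hk). apply s_lim_mono; auto; lra. Qed.

Lemma y_lim_nonneg n t : (n < N)%nat -> 0 <= t <= T -> 0 <= y_lim n t.
Proof. intros Hn Ht. rewrite <- (y_lim_0 n Hn). apply y_lim_mono; auto; lra. Qed.

Lemma fluid_lim_FMS0 : is_FMS0 N K sched Rm f lam T fluid_lim.
Proof.
  unfold is_FMS0; cbn [fq fa fy fs fluid_lim].
  split; [exact q_lim_0|].
  split.
  { intros n Hn. repeat split; apply lipschitz_abs_cont;
      auto using q_lim_lipschitz, lipschitz_linear, y_lim_lipschitz. }
  split; [intros k Hk; apply lipschitz_abs_cont, s_lim_lipschitz; auto|].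
  split.
  { intros t Ht. split; [intros n Hn; repeat split|].
    - apply q_lim_nonneg; auto.
    - apply arrivals_lim_nonneg; auto.
    - apply y_lim_nonneg; auto.
    - split; [intros k Hk; apply s_lim_nonneg; auto|].
      split; [intros n Hn; rewrite q_lim_0 by auto; unfold q_lim, v_lim; ring|].
      split; [reflexivity|].
      split; [apply s_lim_total; auto | intros n Hn; apply y_lim_le_served; auto]. }
  split; [exact s_lim_mono|].
  split; [exact y_lim_mono|].
  intros t Ht. split; intros.
  - eapply y_lim_deriv0; eauto.
  - eapply s_lim_deriv0; eauto.
Qed.

Lemma scaled_paths_near_fluid_lim delta : 0 < delta -> exists J, forall j, (J <= j)%nat ->
  sup_dist_lt N K T (scaled_path (r j) (As j) (Qs j) (Ys j) (sigs j)) fluid_lim delta.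
Proof.
  intros Hdel.
  destruct (unif_cv_fin T N q_seq q_lim q_seq_cv (delta / 2) ltac:(lra)) as [J1 HJ1].
  destruct (unif_cv_fin T N a_seq (fun n t => lam n * t) arrivals_cv (delta / 2) ltac:(lra)) as [J2 HJ2].
  destruct (unif_cv_fin T N y_seq y_lim Hy_cv (delta / 2) ltac:(lra)) as [J3 HJ3].
  destruct (unif_cv_fin T K s_seq s_lim Hs_cv (delta / 2) ltac:(lra)) as [J4 HJ4].
  exists (max (max J1 J2) (max J3 J4)). intros j Hj. exists (delta / 2). split; [lra|].
  intros t Ht. cbn [fq fa fy fs fluid_lim scaled_path]. split.
  - intros n Hn. repeat split; [apply (HJ1 j ltac:(lia) t Ht n Hn) |
      apply (HJ2 j ltac:(lia) t Ht n Hn) | apply (HJ3 j ltac:(lia) t Ht n Hn)].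
  - intros k Hk. apply (HJ4 j ltac:(lia) t Ht k Hk).
Qed.

End Limit.

Record sample := mk_sample {
  smp_r : nat; smp_A : nat -> nat -> R; smp_Q : nat -> nat -> R;
  smp_Y : nat -> nat -> R; smp_sig : nat -> nat }.

Definition sample_regular (eta : R) (p : sample) : Prop :=
  regular_sample (smp_r p) eta (smp_A p) (smp_Q p) (smp_Y p) (smp_sig p).

(* Coordinates [c < K] are the schedule counts, coordinates [K + n] the unused services. *)
Definition sample_coord (p : sample) (c : nat) : nat -> R :=
  if Nat.ltb c K then fun tau => INR (count_sched (smp_sig p) c tau)
  else fun tau => smp_Y p tau (c - K).

Lemma sample_coord_incr eta p c : sample_regular eta p -> (c < K + N)%nat ->
  sample_coord p c O = 0 /\ forall tau, 0 <= sample_coord p c (S tau) - sample_coord p c tau <= L.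
Proof.
  intros Hp Hc. pose proof L_ge_1. unfold sample_coord. destruct (Nat.ltb_spec c K).
  - split; [reflexivity|]. intros tau. pose proof (count_incr (smp_sig p) c tau). lra.
  - destruct (rs_net Hp) as [_ [HY0 _]]. split; [apply HY0; lia|].
    intros tau. apply (regular_Y_incr Hp). lia.
Qed.

Lemma regular_samples_subseq_near (ps : nat -> sample) (eta : nat -> R) :
  (forall j, sample_regular (eta j) (ps j)) -> (forall j, (0 < smp_r (ps j))%nat) ->
  (forall e, 0 < e -> exists J, forall j, (J <= j)%nat -> eta j < e /\ / INR (smp_r (ps j)) < e) ->
  forall delta, 0 < delta -> exists j,
    dist_FMS0_lt N K sched Rm f lam T
      (scaled_path (smp_r (ps j)) (smp_A (ps j)) (smp_Q (ps j)) (smp_Y (ps j)) (smp_sig (ps j))) delta.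
Proof.
  intros Hnear Hr Hsmall delta Hdel.
  set (g := fun j c => scaled (smp_r (ps j)) (sample_coord (ps j) c)).
  assert (Hlip : forall j c s t, (c < K + N)%nat -> 0 <= s <= T -> 0 <= t <= T ->
             Rabs (g j c t - g j c s) <= L * Rabs (t - s)).
  { intros j c s t Hc Hs Ht. apply scaled_lipschitz; [auto | | lra | lra].
    apply (sample_coord_incr _ _ _ (Hnear j) Hc). }
  assert (Hbound : forall j c t, (c < K + N)%nat -> 0 <= t <= T -> Rabs (g j c t) <= L * T).
  { intros j c t Hc Ht. pose proof (Hlip j c 0 t Hc ltac:(lra) Ht).
    unfold g in *. rewrite scaled_zero, (proj1 (sample_coord_incr _ _ _ (Hnear j) Hc)) in *.
    rewrite Rdiv_0_l, !Rminus_0_r, (Rabs_right t) in * by lra.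
    pose proof L_ge_1. nra. }
  destruct (arzela_ascoli T L (L * T) (K + N) g HT ltac:(pose proof L_ge_1; lra) Hbound Hlip)
    as [d [Hd [G HG]]].
  set (sub := fun j => ps (d j)).
  assert (Hsub_small : forall e, 0 < e -> exists J, forall j, (J <= j)%nat ->
            eta (d j) < e /\ / INR (smp_r (sub j)) < e).
  { intros e He. destruct (Hsmall e He) as [J HJ]. exists J. intros j Hj.
    apply HJ. specialize (Hd j). lia. }
  assert (Hs_cv : forall k, (k < K)%nat ->
            unif_cv T (fun j => s_seq (fun j => smp_r (sub j)) (fun j => smp_sig (sub j)) j k) (G k)).
  { intros k Hk. apply (unif_cv_ext T (fun j => g (d j) k) _ (G k)); auto; [|apply HG; lia].
    intros j t _. unfold g, sample_coord, s_seq. destruct (Nat.ltb_spec k K); [reflexivity | lia]. }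
  assert (Hy_cv : forall n, (n < N)%nat ->
            unif_cv T (fun j => y_seq (fun j => smp_r (sub j)) (fun j => smp_Y (sub j)) j n) (G (K + n)%nat)).
  { intros n Hn. apply (unif_cv_ext T (fun j => g (d j) (K + n)%nat) _ (G (K + n)%nat)); auto;
      [|apply HG; lia].
    intros j t _. unfold g, sample_coord, y_seq. destruct (Nat.ltb_spec (K + n) K); [lia|].
    replace (K + n - K)%nat with n by lia. reflexivity. }
  destruct (scaled_paths_near_fluid_lim _ _ _ _ _ _ (fun j => Hnear (d j)) (fun j => Hr (d j))
    Hsub_small _ _ Hs_cv Hy_cv delta Hdel) as [J HJ].
  exists (d J). exists (fluid_lim G (fun n => G (K + n)%nat)). split; [|apply HJ; auto].
  apply (fluid_lim_FMS0 _ _ _ _ _ _ (fun j => Hnear (d j)) (fun j => Hr (d j)) Hsub_small _ _ Hs_cv Hy_cv).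
Qed.

Theorem regular_samples_near_FMS0 delta : 0 < delta -> exists eta, 0 < eta /\
  exists r1 : nat, forall r, (r1 <= r)%nat -> forall A Q Y sig, regular_sample r eta A Q Y sig ->
    dist_FMS0_lt N K sched Rm f lam T (scaled_path r A Q Y sig) delta.
Proof.
  intros Hdel. apply NNPP. intros Hneg.
  assert (Hbad : forall j, exists p, (S j <= smp_r p)%nat /\ sample_regular (/ (INR j + 1)) p /\
      ~ dist_FMS0_lt N K sched Rm f lam T
          (scaled_path (smp_r p) (smp_A p) (smp_Q p) (smp_Y p) (smp_sig p)) delta).
  { intros j. apply NNPP. intros Hgood. apply Hneg. exists (/ (INR j + 1)).
    split; [apply Rinv_0_lt_compat; pose proof (pos_INR j); lra|].
    exists (S j). intros r Hr A Q Y sig Hreg. apply NNPP. intros Hfar. apply Hgood.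
    exists (mk_sample r A Q Y sig). auto. }
  destruct (choice _ Hbad) as [ps Hps].
  assert (Hr : forall j, (0 < smp_r (ps j))%nat) by (intros j; specialize (Hps j); lia).
  assert (Hsmall : forall e, 0 < e -> exists J, forall j, (J <= j)%nat ->
            / (INR j + 1) < e /\ / INR (smp_r (ps j)) < e).
  { intros e He. destruct (inv_INR_S_small e He) as [J HJ]. exists J. intros j Hj.
    split; [auto|]. apply Rle_lt_trans with (/ (INR j + 1)); [|auto].
    apply Rinv_le_contravar; [pose proof (pos_INR j); lra|]. rewrite <- S_INR. apply le_INR, Hps. }
  destruct (regular_samples_subseq_near ps _ (fun j => proj1 (proj2 (Hps j))) Hr Hsmall delta Hdel)
    as [j Hj].
  exact (proj2 (proj2 (Hps j)) Hj).
Qed.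

End FluidLimit.

(** * Probability *)

Section Probability.
Variables (Omega : Type) (F : (Omega -> Prop) -> Prop) (P : (Omega -> Prop) -> R).
Hypothesis HF : sigma_algebra F.
Hypothesis HP : probability F P.

Lemma event_ext (E E' : Omega -> Prop) : (forall w, E w <-> E' w) -> E = E'.
Proof.
  intros H. apply functional_extensionality. intros w. apply propositional_extensionality. auto.
Qed.

Lemma F_ext E E' : F E -> (forall w, E w <-> E' w) -> F E'.
Proof. intros H1 H2. rewrite <- (event_ext E E'); auto. Qed.

Lemma F_true : F (fun _ => True).
Proof. apply HF. Qed.

Lemma F_compl E : F E -> F (fun w => ~ E w).
Proof. apply HF. Qed.

Lemma F_false : F (fun _ => False).
Proof. apply (F_ext (fun w => ~ True)); [apply F_compl, F_true | tauto]. Qed.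

Lemma F_exists (E : nat -> Omega -> Prop) : (forall i, F (E i)) -> F (fun w => exists i, E i w).
Proof. apply HF. Qed.

Lemma F_forall (E : nat -> Omega -> Prop) : (forall i, F (E i)) -> F (fun w => forall i, E i w).
Proof.
  intros H. apply (F_ext (fun w => ~ exists i, ~ E i w)).
  - apply F_compl, F_exists. intros. apply F_compl. auto.
  - intros w. split; [intros Hn i; apply NNPP; intros Hc; apply Hn; exists i; auto|].
    intros Ha [i Hi]. apply Hi, Ha.
Qed.

Lemma F_or A B : F A -> F B -> F (fun w => A w \/ B w).
Proof.
  intros HA HB. apply (F_ext (fun w => exists i, (match i with O => A | S _ => B end) w)).
  - apply F_exists. intros [|i]; auto.
  - intros w. split; [intros [[|i] H]; auto|]. intros [H|H]; [exists O | exists 1%nat]; auto.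
Qed.

Lemma F_and A B : F A -> F B -> F (fun w => A w /\ B w).
Proof.
  intros HA HB. apply (F_ext (fun w => ~ (~ A w \/ ~ B w))); [|intros; tauto].
  apply F_compl, F_or; apply F_compl; auto.
Qed.

Lemma F_imp (C : Prop) E : (C -> F E) -> F (fun w => C -> E w).
Proof.
  intros H. destruct (classic C) as [Hc|Hc].
  - apply (F_ext E); [auto | intros; tauto].
  - apply (F_ext (fun _ => True)); [apply F_true | intros; tauto].
Qed.

Lemma F_prop_and (C : Prop) E : (C -> F E) -> F (fun w => C /\ E w).
Proof.
  intros H. apply (F_ext (fun w => ~ (C -> ~ E w))); [|intros; tauto].
  apply F_compl, F_imp. intros Hc. apply F_compl. auto.
Qed.

Lemma F_ge (X : Omega -> R) : (forall c, F (fun w => X w <= c)) -> forall c, F (fun w => X w >= c).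
Proof.
  intros HX c. apply (F_ext (fun w => ~ exists k : nat, X w <= c - / (INR k + 1))).
  - apply F_compl, F_exists. auto.
  - intros w. split.
    + intros Hn. apply Rnot_lt_ge. intros Hlt.
      destruct (inv_INR_S_small (c - X w) ltac:(lra)) as [k Hk].
      apply Hn. exists k. specialize (Hk k (le_n k)). lra.
    + intros Hge [k Hk]. pose proof (pos_INR k).
      assert (0 < / (INR k + 1)) by (apply Rinv_0_lt_compat; lra). lra.
Qed.

Lemma F_bounded N (X : Omega -> nat -> R) : (forall n c, (n < N)%nat -> F (fun w => X w n <= c)) ->
  forall c, F (fun w => forall n, (n < N)%nat -> X w n <= c).
Proof.
  intros HX c. apply (F_forall (fun n w => (n < N)%nat -> X w n <= c)). intros n. apply F_imp. auto.
Qed.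

Lemma Rabs_div_ge_iff x d D : 0 < D -> (Rabs x / D >= d <-> x >= d * D \/ - x >= d * D).
Proof.
  intros HD. assert (E : Rabs x / D >= d <-> Rabs x >= d * D).
  { unfold Rdiv. split; intros H.
    - apply Rge_le in H. apply Rle_ge. apply (Rmult_le_compat_r D) in H; [|lra].
      rewrite Rmult_assoc, Rinv_l, Rmult_1_r in H by lra. lra.
    - apply Rle_ge. apply (Rmult_le_reg_r D); auto. rewrite Rmult_assoc, Rinv_l by lra. lra. }
  rewrite E. destruct (Rcase_abs x); [rewrite Rabs_left | rewrite Rabs_right]; auto; split; intros; lra.
Qed.

Lemma F_large_deviation N (A : Omega -> nat -> nat -> R) (lam : nat -> R) (R0 : nat) d :
  (forall tau n c, (n < N)%nat -> F (fun w => A w tau n <= c)) -> (0 < R0)%nat ->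
  F (fun w => exists tau n, (tau <= R0)%nat /\ (n < N)%nat /\
                Rabs (A w tau n - lam n * INR tau) / INR R0 >= d).
Proof.
  intros HA HR. assert (HR' : 0 < INR R0) by (apply lt_0_INR; auto).
  apply (F_ext (fun w => exists tau n, (tau <= R0 /\ n < N)%nat /\
     (A w tau n >= lam n * INR tau + d * INR R0 \/ - A w tau n >= d * INR R0 - lam n * INR tau))).
  - apply F_exists. intros tau. apply F_exists. intros n. apply F_prop_and. intros [_ Hn].
    apply F_or; apply F_ge; intros c; [auto|].
    apply (F_ext (fun w => A w tau n >= - c)); [apply F_ge; auto | intros w; lra].
  - intros w. split; intros [tau [n [H1 H2]]]; exists tau, n.
    + destruct H1. do 2 (split; [auto|]). apply Rabs_div_ge_iff; auto. lra.
    + destruct H2 as [H2 H3]. split; [auto|]. apply Rabs_div_ge_iff in H3; auto. lra.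
Qed.

Lemma P_empty : P (fun _ => False) = 0.
Proof.
  destruct HP as [_ [_ Hsum]].
  specialize (Hsum (fun _ _ => False) (fun _ => F_false) ltac:(intros; auto)). cbv beta in Hsum.
  rewrite (event_ext (fun w => exists _ : nat, False) (fun _ => False)) in Hsum
    by (intros; split; [intros [_ []] | intros []]).
  set (c := P (fun _ => False)) in *.
  assert (Hs : forall n, sum_f_R0 (fun _ => c) n = INR (S n) * c).
  { induction n as [|n IH]; simpl sum_f_R0; [simpl; ring|]. rewrite IH, (S_INR (S n)). ring. }
  apply NNPP. intros Hc. assert (Hca : 0 < Rabs c) by (apply Rabs_pos_lt; auto).
  destruct (Hsum (Rabs c / 2) ltac:(lra)) as [M HM]. specialize (HM (S M) ltac:(lia)).
  rewrite Hs in HM. unfold Rdist in HM.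
  replace (INR (S (S M)) * c - c) with (INR (S M) * c) in HM by (rewrite (S_INR (S M)); ring).
  rewrite Rabs_mult, Rabs_right in HM by (apply Rle_ge, pos_INR).
  assert (1 <= INR (S M)) by (apply (le_INR 1); lia). nra.
Qed.

Lemma P_disjoint_union A B : F A -> F B -> (forall w, A w -> B w -> False) ->
  P (fun w => A w \/ B w) = P A + P B.
Proof.
  intros HA HB Hd. destruct HP as [_ [_ Hsum]].
  set (E := fun i : nat => match i with O => A | 1%nat => B | _ => fun _ => False end).
  assert (HE : forall i, F (E i)) by (intros [|[|i]]; simpl; auto using F_false).
  assert (Hdis : forall i j, i <> j -> forall w, E i w -> E j w -> False).
  { intros [|[|i]] [|[|j]] Hij w; simpl; intros; try tauto; try lia; eapply Hd; eauto. }
  specialize (Hsum E HE Hdis).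
  rewrite (event_ext (fun w => exists i, E i w) (fun w => A w \/ B w)) in Hsum.
  2:{ intros w. split; [intros [[|[|i]] Hi]; simpl in Hi; tauto|].
      intros [Ha|Hb]; [exists O | exists 1%nat]; auto. }
  apply (uniqueness_sum (fun i => P (E i))); auto.
  assert (Hs : forall m, sum_f_R0 (fun i => P (E i)) (S m) = P A + P B).
  { induction m as [|m IH]; [simpl; ring|]. simpl sum_f_R0 in *. rewrite IH. simpl. rewrite P_empty. ring. }
  intros eps He. exists 1%nat. intros [|n] Hn; [lia|]. unfold Rdist.
  rewrite Hs, Rminus_diag, Rabs_R0. lra.
Qed.

Lemma P_split A B : F A -> F B -> P A = P (fun w => A w /\ B w) + P (fun w => A w /\ ~ B w).
Proof.
  intros HA HB. rewrite <- P_disjoint_union.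
  - f_equal. apply event_ext. intros w. tauto.
  - apply F_and; auto.
  - apply F_and; [|apply F_compl]; auto.
  - intros w. tauto.
Qed.

Lemma P_diff_lb A B : F A -> F B -> P A - P B <= P (fun w => A w /\ ~ B w).
Proof.
  intros HA HB. rewrite (P_split A B HA HB), (P_split B A HB HA).
  rewrite (event_ext (fun w => B w /\ A w) (fun w => A w /\ B w)) by (intros; tauto).
  pose proof (proj1 HP _ (F_and _ _ HB (F_compl _ HA))). lra.
Qed.

(* Continuity from below, through the disjoint increments [G (S c) \ G c]. *)
Lemma P_increasing_to_one (G : nat -> Omega -> Prop) : (forall c, F (G c)) ->
  (forall c w, G c w -> G (S c) w) -> (forall w, exists c, G c w) ->
  forall eps, 0 < eps -> exists c, 1 - eps <= P (G c).
Proof.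
  intros HG Hinc Hall eps He.
  set (D := fun i : nat => match i with O => G O | S c => fun w => G (S c) w /\ ~ G c w end).
  assert (HD : forall i, F (D i)) by (intros [|i]; simpl; auto; apply F_and; [|apply F_compl]; auto).
  assert (Gmono : forall i j, (i <= j)%nat -> forall w, G i w -> G j w).
  { intros i j Hij w Hw. induction Hij; auto. }
  assert (Hdis : forall i j, i <> j -> forall w, D i w -> D j w -> False).
  { assert (Hlt : forall i j, (i < j)%nat -> forall w, D i w -> D j w -> False).
    { intros i [|j] Hij w Hi Hj; [lia|]. destruct Hj as [_ Hj]. apply Hj, (Gmono i j ltac:(lia)).
      destruct i; simpl in Hi; tauto. }
    intros i j Hij w Hi Hj. destruct (lt_dec i j); [apply (Hlt i j) with w | apply (Hlt j i) with w];
      auto; lia. }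
  destruct HP as [_ [H1 H2]]. specialize (H2 D HD Hdis).
  rewrite (event_ext (fun w => exists i, D i w) (fun _ => True)), H1 in H2.
  2:{ intros w. split; auto. intros _. destruct (Hall w) as [c Hc]. clear - Hc.
      induction c as [|c IH]; [exists O; auto|].
      destruct (classic (G c w)); [auto | exists (S c); simpl; auto]. }
  assert (Hps : forall c, sum_f_R0 (fun i => P (D i)) c = P (G c)).
  { induction c as [|c IH]; [reflexivity|]. simpl sum_f_R0. rewrite IH, <- P_disjoint_union.
    - f_equal. apply event_ext. intros w. simpl.
      split; [intros [H|[H _]]; auto|]. intros H. destruct (classic (G c w)); auto.
    - auto.
    - apply F_and; [|apply F_compl]; auto.
    - intros w Hw [_ Hn]. auto. }
  destruct (H2 eps He) as [M HM]. exists M. specialize (HM M (le_n M)).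
  rewrite Hps in HM. unfold Rdist in HM. apply Rabs_lt_inv in HM. lra.
Qed.

Lemma P_bounded_to_one N (X : Omega -> nat -> R) : (forall n c, (n < N)%nat -> F (fun w => X w n <= c)) ->
  forall eps, 0 < eps -> exists c : nat, 1 - eps <= P (fun w => forall n, (n < N)%nat -> X w n <= INR c).
Proof.
  intros HX. apply P_increasing_to_one.
  - intros c. apply F_bounded. auto.
  - intros c w H n Hn. specialize (H n Hn). rewrite S_INR. lra.
  - intros w. destruct (INR_unbounded (rsum N (fun n => Rabs (X w n)))) as [c Hc]. exists c.
    intros n Hn. pose proof (rsum_term_le N (fun n => Rabs (X w n)) n ltac:(intros; apply Rabs_pos) Hn).
    pose proof (Rle_abs (X w n)). cbv beta in *. lra.
Qed.

End Probability.

Lemma window_deviation_bound (x d eta : R) (mm r : nat) : (0 < mm * r)%nat ->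
  x / INR (mm * r) < d -> d <= eta / INR mm -> x <= eta * INR r.
Proof.
  intros Hpos Hx Hd. rewrite mult_INR in *.
  assert (0 < INR mm) by (apply lt_0_INR; lia). assert (0 < INR r) by (apply lt_0_INR; lia).
  apply (Rmult_lt_compat_r (INR mm * INR r)) in Hx; [|nra].
  replace (x / (INR mm * INR r) * (INR mm * INR r)) with x in Hx by (field; lra).
  apply (Rmult_le_compat_r (INR mm * INR r)) in Hd; [|nra].
  replace (eta / INR mm * (INR mm * INR r)) with (eta * INR r) in Hd by (field; lra). lra.
Qed.

Theorem corollary4p4
  (N K : nat) (sched : nat -> nat -> R) (Rm : nat -> nat -> R) (f : R -> R)
  (HS : schedule_set N K sched) (HR : routing_matrix N Rm) (Hf : f_standing f)
  (Hscale : scale_invariance N K sched Rm f) (Hmh : multihop_closure N K sched Rm)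
  (Omega : Type) (F : (Omega -> Prop) -> Prop) (P : (Omega -> Prop) -> R)
  (HF : sigma_algebra F) (HP : probability F P)
  (A Q Y : Omega -> nat -> nat -> R) (sig : Omega -> nat -> nat)
  (Hnet : forall w, MW_network N K sched Rm f (A w) (Q w) (Y w) (sig w))
  (HQ0 : forall w n, (n < N)%nat -> 0 <= Q w O n)
  (HQ0m : forall n c, (n < N)%nat -> F (fun w => Q w O n <= c))
  (HAm : forall tau n c, (n < N)%nat -> F (fun w => A w tau n <= c))
  (HAmono : forall w tau n, (n < N)%nat -> A w tau n <= A w (S tau) n)
  (HAstat : stationary_increments N P A)
  (lam : nat -> R)
  (Hlam : exists E, F E /\ P E = 1 /\
            forall w, E w -> forall n, (n < N)%nat ->
              Un_cv (fun tau => A w tau n / INR tau) (lam n))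
  (dr : nat -> R) (Hdr : Un_cv dr 0)
  (Hdev : Un_cv (fun r => P (fun w => exists tau n, (tau <= r)%nat /\ (n < N)%nat /\
                    Rabs (A w tau n - lam n * INR tau) / INR r >= dr r)) 0)
  (T : R) (HT : 0 < T) :
  forall delta, 0 < delta ->
    prob_tends_to_one F P
      (fun r w => dist_FMS0_lt N K sched Rm f lam T
                    (scaled_path r (A w) (Q w) (Y w) (sig w)) delta).
Proof.
  intros delta Hdel eps Heps. destruct HS as [HS _]. destruct HR as [HR01 _].
  destruct (INR_unbounded (T + 1)) as [mm Hmm].
  assert (Hmm0 : 0 < INR mm) by lra. assert (Hmm1 : (0 < mm)%nat) by (apply INR_lt; simpl; lra).
  destruct (regular_samples_near_FMS0 N K sched Rm f HS HR01 Hf Hscale lam T mm HT (Rlt_le _ _ Hmm)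
    delta Hdel) as [eta [Heta [r1 Hr1]]].
  destruct (P_bounded_to_one Omega F P HF HP N (fun w n => Q w O n) HQ0m (eps / 2) ltac:(lra)) as [c Hc].
  destruct (Un_cv_0_eventually_lt _ (eps / 2) Hdev ltac:(lra)) as [R0 HR0].
  destruct (Un_cv_0_eventually_lt _ (eta / INR mm) Hdr ltac:(apply Rdiv_lt_0_compat; lra)) as [R1 HR1].
  destruct (INR_unbounded (INR c / eta)) as [rc Hrc].
  exists (max (max r1 R0) (max R1 (max rc 1))). intros r Hr.
  set (R := (mm * r)%nat). assert (HRr : (r <= R)%nat) by (unfold R; nia).
  assert (HR0pos : (0 < R)%nat) by lia.
  set (Dev := fun w => exists tau n, (tau <= R)%nat /\ (n < N)%nat /\
                         Rabs (A w tau n - lam n * INR tau) / INR R >= dr R).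
  exists (fun w => (forall n, (n < N)%nat -> Q w O n <= INR c) /\ ~ Dev w). split; [|split].
  - apply F_and; [exact HF | apply F_bounded; auto |].
    apply F_compl; [exact HF | apply F_large_deviation; auto].
  - specialize (HR0 R ltac:(lia)). fold Dev in HR0.
    pose proof (P_diff_lb Omega F P HF HP _ Dev (F_bounded Omega F HF N _ HQ0m (INR c))
      (F_large_deviation Omega F HF N A lam R (dr R) HAm HR0pos)).
    cbv beta in *. lra.
  - intros w [Hc0 Hsmall]. apply (Hr1 r ltac:(lia)). split; [apply Hnet | | apply HAmono |].
    + intros n Hn. split; [auto|]. apply Rle_trans with (INR c); [auto|].
      assert (INR rc <= INR r) by (apply le_INR; lia).
      replace (INR c) with (INR c / eta * eta) by (field; lra). nra.
    + intros tau n Htau Hn. apply (window_deviation_bound _ (dr R) _ mm r HR0pos).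
      * apply Rnot_ge_lt. intros Hge. apply Hsmall. exists tau, n. auto.
      * left. apply HR1. lia.
Qed.
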